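(* Let $m\ge 2$ and $n\ge 4$. The reduced quiver of the GL$_m$-dimer of a fan triangulation of the convex $n$-gon has exactly $$P_2(n,m-1)=\frac{(m-1)^2(n-2)+(m-1)(n-4)}{2}$$ internal vertices.
   Context: For integers $s,k$, $P_2(s,k)=\frac{k^2(s-2)+k(s-4)}{2}$ (polygonal number of second order). A fan triangulation is one whose $n-3$ diagonals all share a common polygon vertex. GL$_m$-dimer and its quiver: let $T$ be a triangulation of a convex $n$-gon $P$. Subdivide every triangle of $T$ by $m-1$ equidistant lines parallel to each of its sides into $m^2$ small triangles (upward ones, i.e. translates of the big triangle, and downward ones). Put a black node at the midpoint of each of the $m$ segments into which each side of each triangle (edge of $P$ or diagonal of $T$) is cut, a black node in every downward small triangle, and a white node in every upward small triangle. Join two nodes of different colour if they belong to the same small triangle or their small triangles share a side. The quiver has one vertex for each connected component of the complement of this graph in $P$ and, for each edge of the graph, one arrow between the two components it separates, oriented so that the white endpoint lies to its left; each white node gives an anticlockwise face and each black node of degree $\ge2$ a clockwise face. Arrows in one face are boundary arrows, in two faces internal arrows; every 2-cycle of internal arrows is removed using the relations from the natural potential (on the graph: a bivalent black node is deleted and its two white neighbours merged), giving the reduced quiver. Boundary vertices are those incident with a boundary arrow; all others are internal vertices. *)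

From Stdlib Require Import Reals ZArith List.
Open Scope R_scope.

Definition pt := (R * R)%type.

(* orientation determinant of (a,b,c): > 0 iff counterclockwise *)
Definition orient (a b c : pt) : R :=
  (fst b - fst a) * (snd c - snd a) - (snd b - snd a) * (fst c - fst a).

Definition convex_polygon (n : nat) (p : nat -> pt) : Prop :=
  (forall i j k, (i < j)%nat -> (j < k)%nat -> (k < n)%nat -> orient (p i) (p j) (p k) > 0) \/
  (forall i j k, (i < j)%nat -> (j < k)%nat -> (k < n)%nat -> orient (p i) (p j) (p k) < 0).

Definition in_polygon (n : nat) (p : nat -> pt) (q : pt) : Prop :=
  exists lam : nat -> R,
    (forall i, (i < n)%nat -> 0 <= lam i) /\
    sum_f_R0 lam (n - 1) = 1 /\
    fst q = sum_f_R0 (fun i => lam i * fst (p i)) (n - 1) /\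
    snd q = sum_f_R0 (fun i => lam i * snd (p i)) (n - 1).

Definition bary (A B C : pt) (x y z d : R) : pt :=
  ((x * fst A + y * fst B + z * fst C) / d,
   (x * snd A + y * snd B + z * snd C) / d).

(* The fan triangulation with apex a: its triangles are
   (p a, p (a+t), p (a+t+1)) (indices mod n), t = 1, ..., n-2, i.e. the
   n-3 diagonals are (p a, p (a+t)), t = 2, ..., n-2. *)
Definition fan_tri (n : nat) (p : nat -> pt) (a t : nat) : pt * pt * pt :=
  (p a, p ((a + t) mod n), p ((a + t + 1) mod n)).

(* Subdivision of triangle ABC into m^2 small triangles.  Lattice points are
   (i A + j B + k C)/m with i+j+k = m.  The upward small triangle (i,j,k),
   i+j+k = m-1, has corners (i+1,j,k),(i,j+1,k),(i,j,k+1); its white node is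
   placed at its centroid.  The downward small triangle (i,j,k), i+j+k = m-2,
   has corners (i+1,j+1,k),(i+1,j,k+1),(i,j+1,k+1); its black node is placed
   at its centroid. *)
Definition white_node (A B C : pt) (m i j k : nat) : pt :=
  bary A B C (3 * INR i + 1) (3 * INR j + 1) (3 * INR k + 1) (3 * INR m).
Definition down_node (A B C : pt) (m i j k : nat) : pt :=
  bary A B C (3 * INR i + 2) (3 * INR j + 2) (3 * INR k + 2) (3 * INR m).
(* black nodes at midpoints of the m segments of each side:
   side AB: segment between (i+1,j,0) and (i,j+1,0), i+j = m-1, etc. *)
Definition sideAB_node (A B C : pt) (m i j : nat) : pt :=
  bary A B C (2 * INR i + 1) (2 * INR j + 1) 0 (2 * INR m).
Definition sideAC_node (A B C : pt) (m i k : nat) : pt :=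
  bary A B C (2 * INR i + 1) 0 (2 * INR k + 1) (2 * INR m).
Definition sideBC_node (A B C : pt) (m j k : nat) : pt :=
  bary A B C 0 (2 * INR j + 1) (2 * INR k + 1) (2 * INR m).

(* Edges (white w, black b) inside one triangle:
   - the white node of the upward triangle (i,j,k) and the black node of a
     downward triangle sharing a side with it, i.e. a downward triangle
     (i',j',k') with (i,j,k) = (i',j',k') + e_l;
   - the white node of the upward triangle (i,j,k) and the side node of the
     side segment that is a side of that upward triangle (the only small
     triangle containing that segment midpoint). *)
Definition tri_edge (A B C : pt) (m : nat) (w b : pt) : Prop :=
  exists i j k, (i + j + k = m - 1)%nat /\ w = white_node A B C m i j k /\
   ((exists i' j' k', (i' + j' + k' = m - 2)%nat /\
       ((i = S i' /\ j = j' /\ k = k') \/ (i = i' /\ j = S j' /\ k = k') \/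
        (i = i' /\ j = j' /\ k = S k')) /\
       b = down_node A B C m i' j' k')
    \/ (k = 0%nat /\ b = sideAB_node A B C m i j)
    \/ (j = 0%nat /\ b = sideAC_node A B C m i k)
    \/ (i = 0%nat /\ b = sideBC_node A B C m j k)).

(* Nodes are identified with their positions in the plane, so a side node on a
   diagonal is shared by the two triangles containing that diagonal. *)
Definition dimer_edge (n : nat) (p : nat -> pt) (a m : nat) (w b : pt) : Prop :=
  exists t, (1 <= t <= n - 2)%nat /\
    let '(A, B, C) := fan_tri n p a t in tri_edge A B C m w b.

Definition on_graph n p a m (q : pt) : Prop :=
  exists w b s, dimer_edge n p a m w b /\ 0 <= s <= 1 /\
    q = (fst w + s * (fst b - fst w), snd w + s * (snd b - snd w)).

Definition region n p a m (q : pt) : Prop :=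
  in_polygon n p q /\ ~ on_graph n p a m q.

Definition conn n p a m (q1 q2 : pt) : Prop :=
  exists g : R -> pt,
    (forall t, 0 <= t <= 1 ->
       continuity_pt (fun s => fst (g s)) t /\ continuity_pt (fun s => snd (g s)) t) /\
    g 0 = q1 /\ g 1 = q2 /\
    (forall t, 0 <= t <= 1 -> region n p a m (g t)).

(* The arrow attached to the edge (w,b) crosses the edge at its midpoint
   M = (w+b)/2 in direction r = rot90(b - w), so that the white endpoint is on
   its left.  arrow_end (-1) w b q : the tail component of the arrow is the
   component of q;  arrow_end 1 w b q : the same for the head. *)
Definition arrow_end n p a m (sg : R) (w b q : pt) : Prop :=
  let Mx := (fst w + fst b) / 2 in
  let My := (snd w + snd b) / 2 in
  let rx := - (snd b - snd w) in
  let ry := fst b - fst w in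
  exists eps0, 0 < eps0 /\
    forall eps, 0 < eps < eps0 ->
      region n p a m (Mx + sg * eps * rx, My + sg * eps * ry) /\
      conn n p a m q (Mx + sg * eps * rx, My + sg * eps * ry).

(* An arrow lies in the anticlockwise face of its white node, and in the
   clockwise face of its black node iff that node has degree >= 2.  Hence the
   boundary arrows (in exactly one face) are those whose black endpoint has
   degree 1. *)
Definition boundary_arrow n p a m (w b : pt) : Prop :=
  dimer_edge n p a m w b /\ forall w', dimer_edge n p a m w' b -> w' = w.

(* Quiver vertices are components of the complement, represented by any of
   their points.  Reducing the quiver only removes (2-cycles of) internal
   arrows, so vertices and boundary arrows of the reduced quiver are those of
   the quiver. *)
Definition internal_vertex n p a m (q : pt) : Prop :=
  region n p a m q /\
  ~ (exists w b, boundary_arrow n p a m w b /\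
       (arrow_end n p a m (-1) w b q \/ arrow_end n p a m 1 w b q)).

Definition num_internal_vertices n p a m (N : Z) : Prop :=
  exists l : list pt,
    Z.of_nat (length l) = N /\
    (forall q, In q l -> internal_vertex n p a m q) /\
    (forall i j, (i < j)%nat -> (j < length l)%nat ->
        ~ conn n p a m (nth i l (0, 0)) (nth j l (0, 0))) /\
    (forall q, internal_vertex n p a m q -> exists r, In r l /\ conn n p a m q r).

Definition P2 (s k : Z) : Z := ((k * k * (s - 2) + k * (s - 4)) / 2)%Z.

(* Measure each triangle of the fan in barycentric coordinates scaled to sum
   to m.  Inside a triangle the dimer graph is exactly the union of the
   boundaries of the hexagonal Voronoi cells of the lattice points
   i + j + k = m: every edge consists of points equidistant from two lattice
   points, and a point lying in no open cell lies on an edge.  Gluing the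
   triangles along the diagonals, the cells of the lattice points of the
   triangulated polygon are open, pairwise disjoint, cover the complement of
   the graph and are path connected through their centres, so they are the
   vertices of the quiver.  The boundary arrows are those at the side nodes on
   the edges of the polygon, and crossing one of them leads between the cells of
   two lattice points on the boundary; hence the internal vertices are the cells
   of the interior lattice points.  Labelling a point by the first triangle
   containing it, with coordinates (i, j, k) at the apex and at the vertices
   t and t + 1, these are the points with i, k >= 1 in each of the first n - 3
   triangles and those with i, j, k >= 1 in the last one:
   (n - 3) m (m - 1) / 2 + (m - 1) (m - 2) / 2 = P2(n, m - 1) of them. *)

From Stdlib Require Import Reals Lra Lia List ZArith Classical ClassicalEpsilon Ranalysis5.
Import ListNotations.

Open Scope R_scope.

(** * Barycentric coordinates *)

Definition seg (w b : pt) (s : R) : pt :=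
  (fst w + s * (fst b - fst w), snd w + s * (snd b - snd w)).

Lemma orient_rot A B C : orient B C A = orient A B C.
Proof. unfold orient; ring. Qed.

Lemma orient_swap A B C : orient A C B = - orient A B C.
Proof. unfold orient; ring. Qed.

Lemma orient_same12 A B : orient A A B = 0.
Proof. unfold orient; ring. Qed.

Lemma orient_same23 A B : orient A B B = 0.
Proof. unfold orient; ring. Qed.

Lemma orient_same13 A B : orient A B A = 0.
Proof. unfold orient; ring. Qed.

Lemma INR_sum3 i j k N : (i + j + k = N)%nat -> INR i + INR j + INR k = INR N.
Proof. intros <-. rewrite !plus_INR. ring. Qed.

Lemma INR_sum3_pred i j k m : (1 <= m)%nat -> (i + j + k = m - 1)%nat ->
  INR i + INR j + INR k + 1 = INR m.
Proof. intros Hm H. rewrite (INR_sum3 i j k (m - 1)), minus_INR by lia. simpl. lra. Qed.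

Lemma INR_sum3_pred2 i j k m : (2 <= m)%nat -> (i + j + k = m - 2)%nat ->
  INR i + INR j + INR k + 2 = INR m.
Proof. intros Hm H. rewrite (INR_sum3 i j k (m - 2)), minus_INR by lia. simpl. lra. Qed.

Section Barycentric.

Variables (A B C : pt) (m : nat).

(* Barycentric coordinates with respect to ABC, scaled so that they sum to m:
   the lattice points of the subdivision are the points with integer coordinates. *)
Definition bcA (q : pt) := INR m * orient q B C / orient A B C.
Definition bcB (q : pt) := INR m * orient A q C / orient A B C.
Definition bcC (q : pt) := INR m * orient A B q / orient A B C.
Definition bary_pt (x y z : R) : pt := bary A B C x y z (INR m).

Definition in_tri (q : pt) := 0 <= bcA q /\ 0 <= bcB q /\ 0 <= bcC q.

Hypothesis Hm : (1 <= m)%nat.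

Let Hm0 : INR m <> 0.
Proof. apply not_0_INR; lia. Qed.

Lemma seg_bary_pt x y z x' y' z' s :
  seg (bary_pt x y z) (bary_pt x' y' z') s =
  bary_pt (x + s * (x' - x)) (y + s * (y' - y)) (z + s * (z' - z)).
Proof. unfold seg, bary_pt, bary; destruct A, B, C; simpl. f_equal; field; auto. Qed.

Lemma white_node_bary i j k :
  white_node A B C m i j k = bary_pt (INR i + /3) (INR j + /3) (INR k + /3).
Proof. unfold white_node, bary_pt, bary; destruct A, B, C; simpl. f_equal; field; auto. Qed.

Lemma down_node_bary i j k :
  down_node A B C m i j k = bary_pt (INR i + 2/3) (INR j + 2/3) (INR k + 2/3).
Proof. unfold down_node, bary_pt, bary; destruct A, B, C; simpl. f_equal; field; auto. Qed.

Lemma sideAB_node_bary i j : sideAB_node A B C m i j = bary_pt (INR i + /2) (INR j + /2) 0.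
Proof. unfold sideAB_node, bary_pt, bary; destruct A, B, C; simpl. f_equal; field; auto. Qed.

Lemma sideAC_node_bary i k : sideAC_node A B C m i k = bary_pt (INR i + /2) 0 (INR k + /2).
Proof. unfold sideAC_node, bary_pt, bary; destruct A, B, C; simpl. f_equal; field; auto. Qed.

Lemma sideBC_node_bary j k : sideBC_node A B C m j k = bary_pt 0 (INR j + /2) (INR k + /2).
Proof. unfold sideBC_node, bary_pt, bary; destruct A, B, C; simpl. f_equal; field; auto. Qed.

Hypothesis HABC : orient A B C <> 0.

Lemma bc_sum q : bcA q + bcB q + bcC q = INR m.
Proof.
  unfold bcA, bcB, bcC, orient in *; destruct q, A, B, C; simpl in *. field; auto.
Qed.

Lemma bary_pt_bc q : bary_pt (bcA q) (bcB q) (bcC q) = q.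
Proof.
  unfold bary_pt, bary, bcA, bcB, bcC, orient in *; destruct q, A, B, C; simpl in *.
  f_equal; field; auto.
Qed.

Section Coordinates.
Variables x y z : R.
Hypothesis Hxyz : x + y + z = INR m.

Lemma bcA_bary_pt : bcA (bary_pt x y z) = x.
Proof.
  unfold bary_pt, bary, bcA, orient in *; destruct A, B, C; simpl in *.
  rewrite <- Hxyz in *. field. auto.
Qed.

Lemma bcB_bary_pt : bcB (bary_pt x y z) = y.
Proof.
  unfold bary_pt, bary, bcB, orient in *; destruct A, B, C; simpl in *.
  rewrite <- Hxyz in *. field. auto.
Qed.

Lemma bcC_bary_pt : bcC (bary_pt x y z) = z.
Proof.
  unfold bary_pt, bary, bcC, orient in *; destruct A, B, C; simpl in *.
  rewrite <- Hxyz in *. field. auto.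
Qed.

End Coordinates.

Lemma bary_pt_inj x y z x' y' z' : x + y + z = INR m -> x' + y' + z' = INR m ->
  bary_pt x y z = bary_pt x' y' z' -> x = x' /\ y = y' /\ z = z'.
Proof.
  intros H H' E.
  pose proof (bcA_bary_pt x y z H) as Ex. pose proof (bcB_bary_pt x y z H) as Ey.
  pose proof (bcC_bary_pt x y z H) as Ez.
  rewrite E, bcA_bary_pt, bcB_bary_pt, bcC_bary_pt in * by exact H'. auto.
Qed.

End Barycentric.

(** * Hexagonal cells *)

(* In scaled barycentric coordinates (X, Y, Z), X + Y + Z = m, the cell of the
   lattice point (i, j, k) is the open hexagon where the offsets X - i, Y - j,
   Z - k pairwise differ by less than 1.  It is the Voronoi cell of (i, j, k)
   for the Euclidean distance of R^3 restricted to the plane X + Y + Z = m. *)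
Definition in_cell (m : nat) (X Y Z : R) (i j k : nat) : Prop :=
  (i + j + k = m)%nat /\
  -1 < (X - INR i) - (Y - INR j) < 1 /\
  -1 < (X - INR i) - (Z - INR k) < 1 /\
  -1 < (Y - INR j) - (Z - INR k) < 1.

Definition in_closed_cell (m : nat) (X Y Z : R) (i j k : nat) : Prop :=
  (i + j + k = m)%nat /\
  -1 <= (X - INR i) - (Y - INR j) <= 1 /\
  -1 <= (X - INR i) - (Z - INR k) <= 1 /\
  -1 <= (Y - INR j) - (Z - INR k) <= 1.

Definition sqdist3 (X Y Z : R) (i j k : nat) : R :=
  (X - INR i) * (X - INR i) + (Y - INR j) * (Y - INR j) + (Z - INR k) * (Z - INR k).

(* The hexagon |u|, |v|, |u - v| <= 1 is the Voronoi cell of 0 for the quadratic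
   form w1^2 + w2^2 + w1 w2 on the lattice Z^2. *)
Lemma hex_form_ge (u v w1 w2 : R) :
  (w1 <= -1 \/ w1 = 0 \/ 1 <= w1) -> (w2 <= -1 \/ w2 = 0 \/ 1 <= w2) ->
  -1 <= u <= 1 -> -1 <= v <= 1 -> -1 <= u - v <= 1 ->
  u * w1 + v * w2 <= w1 * w1 + w2 * w2 + w1 * w2.
Proof.
  intros H1 H2 Hu Hv Huv.
  destruct H1 as [H1|[H1|H1]]; destruct H2 as [H2|[H2|H2]]; subst; try nra;
    destruct (Rle_dec 0 (w1 + w2)); nra.
Qed.

Lemma hex_form_gt (u v w1 w2 : R) :
  (w1 <= -1 \/ w1 = 0 \/ 1 <= w1) -> (w2 <= -1 \/ w2 = 0 \/ 1 <= w2) ->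
  ~ (w1 = 0 /\ w2 = 0) ->
  -1 < u < 1 -> -1 < v < 1 -> -1 < u - v < 1 ->
  u * w1 + v * w2 < w1 * w1 + w2 * w2 + w1 * w2.
Proof.
  intros H1 H2 Hn Hu Hv Huv.
  destruct H1 as [H1|[H1|H1]]; destruct H2 as [H2|[H2|H2]]; subst; try nra;
    try (exfalso; apply Hn; auto; fail); destruct (Rle_dec 0 (w1 + w2)); nra.
Qed.

Lemma INR_sub_trichotomy (a b : nat) :
  INR a - INR b <= -1 \/ INR a - INR b = 0 \/ 1 <= INR a - INR b.
Proof.
  rewrite !INR_IZR_INZ, <- minus_IZR.
  destruct (Z.lt_trichotomy (Z.of_nat a - Z.of_nat b) 0) as [H|[->|H]].
  - left. apply IZR_le. lia.
  - right; left. reflexivity.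
  - right; right. apply IZR_le. lia.
Qed.

Lemma sqdist3_sub X Y Z i j k i' j' k' : (i' + j' + k' = i + j + k)%nat ->
  sqdist3 X Y Z i' j' k' - sqdist3 X Y Z i j k =
  2 * ((INR i' - INR i) * (INR i' - INR i) + (INR j' - INR j) * (INR j' - INR j)
       + (INR i' - INR i) * (INR j' - INR j)
       - ((X - INR i) - (Z - INR k)) * (INR i' - INR i)
       - ((Y - INR j) - (Z - INR k)) * (INR j' - INR j)).
Proof.
  intros Hs. apply (f_equal INR) in Hs. rewrite !plus_INR in Hs.
  assert (Hk : INR k' = INR k - (INR i' - INR i) - (INR j' - INR j)) by lra.
  unfold sqdist3. rewrite Hk. ring.
Qed.

Section HexCells.

Variables (m : nat) (X Y Z : R).

Lemma closed_cell_nearest i j k i' j' k' : (i' + j' + k' = m)%nat ->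
  in_closed_cell m X Y Z i j k -> sqdist3 X Y Z i j k <= sqdist3 X Y Z i' j' k'.
Proof.
  intros Hs' [Hs [H1 [H2 H3]]].
  pose proof (sqdist3_sub X Y Z i j k i' j' k' ltac:(lia)).
  pose proof (hex_form_ge ((X - INR i) - (Z - INR k)) ((Y - INR j) - (Z - INR k))
    (INR i' - INR i) (INR j' - INR j) (INR_sub_trichotomy i' i) (INR_sub_trichotomy j' j)
    ltac:(lra) ltac:(lra) ltac:(lra)).
  lra.
Qed.

Lemma cell_strictly_nearest i j k i' j' k' : (i' + j' + k' = m)%nat ->
  in_cell m X Y Z i j k -> (i, j, k) <> (i', j', k') ->
  sqdist3 X Y Z i j k < sqdist3 X Y Z i' j' k'.
Proof.
  intros Hs' [Hs [H1 [H2 H3]]] Hne.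
  assert (Hw : ~ (INR i' - INR i = 0 /\ INR j' - INR j = 0)).
  { intros [E1 E2]. apply Hne.
    assert (i = i') by (apply INR_eq; lra). assert (j = j') by (apply INR_eq; lra).
    subst. f_equal. lia. }
  pose proof (sqdist3_sub X Y Z i j k i' j' k' ltac:(lia)).
  pose proof (hex_form_gt ((X - INR i) - (Z - INR k)) ((Y - INR j) - (Z - INR k))
    (INR i' - INR i) (INR j' - INR j) (INR_sub_trichotomy i' i) (INR_sub_trichotomy j' j) Hw
    ltac:(lra) ltac:(lra) ltac:(lra)).
  lra.
Qed.

Lemma in_cell_unique i j k i' j' k' :
  in_cell m X Y Z i j k -> in_cell m X Y Z i' j' k' -> (i, j, k) = (i', j', k').
Proof.
  intros H H'. destruct (classic ((i, j, k) = (i', j', k'))) as [E|E]; auto.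
  pose proof (cell_strictly_nearest i j k i' j' k' (proj1 H') H E).
  pose proof (cell_strictly_nearest i' j' k' i j k (proj1 H) H' (not_eq_sym E)). lra.
Qed.

Lemma tie_not_in_cell i1 j1 k1 i2 j2 k2 i j k : (i2 + j2 + k2 = m)%nat ->
  (i1, j1, k1) <> (i2, j2, k2) -> in_closed_cell m X Y Z i1 j1 k1 ->
  sqdist3 X Y Z i1 j1 k1 = sqdist3 X Y Z i2 j2 k2 -> ~ in_cell m X Y Z i j k.
Proof.
  intros Hs2 Hne HW HD HS.
  destruct (classic ((i, j, k) = (i1, j1, k1))) as [E|E].
  - injection E as -> -> ->.
    pose proof (cell_strictly_nearest i1 j1 k1 i2 j2 k2 Hs2 HS Hne). lra.
  - pose proof (cell_strictly_nearest i j k i1 j1 k1 (proj1 HW) HS E).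
    pose proof (closed_cell_nearest i1 j1 k1 i j k (proj1 HS) HW). lra.
Qed.

Lemma in_cell_coord_zero i j k : in_cell m X Y Z i j k -> X + Y + Z = INR m ->
  (X = 0 -> i = 0%nat) /\ (Y = 0 -> j = 0%nat) /\ (Z = 0 -> k = 0%nat).
Proof.
  intros [Hs [[H1 H2] [[H3 H4] [H5 H6]]]] HS. apply INR_sum3 in Hs.
  pose proof (pos_INR i); pose proof (pos_INR j); pose proof (pos_INR k).
  split; [|split]; intros E; [destruct i as [|i'] | destruct j as [|i'] | destruct k as [|i']];
    auto; exfalso; pose proof (pos_INR i'); rewrite S_INR in *; lra.
Qed.

End HexCells.

(* (i + 5/12, j + 5/12, 1/6) is the midpoint of the edge joining the white node
   (i + 1/3, j + 1/3, 1/3) to the side node (i + 1/2, j + 1/2, 0). *)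
Lemma sideAB_midpoint_cells m i j X Y Z dx dy dz : (i + j + 1 = m)%nat ->
  X = INR i + 5/12 + dx -> Y = INR j + 5/12 + dy -> Z = /6 + dz ->
  -/12 < dx < /12 -> -/12 < dy < /12 -> -/12 < dz < /12 ->
  (0 <= X /\ 0 <= Y /\ 0 <= Z) /\
  (dy < dx -> in_cell m X Y Z (S i) j 0) /\ (dx < dy -> in_cell m X Y Z i (S j) 0).
Proof.
  intros Hs -> -> -> Hx Hy Hz. pose proof (pos_INR i); pose proof (pos_INR j).
  unfold in_cell. rewrite !S_INR. simpl INR. repeat split; intros; lra || lia.
Qed.

(** * The dimer graph inside one triangle *)

Lemma floor_nat (X : R) : 0 <= X -> exists i : nat, INR i <= X < INR i + 1.
Proof.
  intros HX. destruct (base_Int_part X) as [H1 H2].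
  assert (Hp : (0 <= Int_part X)%Z).
  { assert (IZR (-1) < IZR (Int_part X)) by lra. apply lt_IZR in H. lia. }
  exists (Z.to_nat (Int_part X)). rewrite INR_IZR_INZ, Z2Nat.id by auto. lra.
Qed.

Lemma max3_cases (a b c : R) :
  (b < a /\ c < a) \/ (a < b /\ c < b) \/ (a < c /\ b < c) \/
  (a = b /\ c <= a) \/ (a = c /\ b <= a) \/ (b = c /\ a <= b).
Proof. lra. Qed.

Lemma min3_cases (a b c : R) :
  (a < b /\ a < c) \/ (b < a /\ b < c) \/ (c < a /\ c < b) \/
  (a = b /\ a <= c) \/ (a = c /\ a <= b) \/ (b = c /\ b <= a).
Proof. lra. Qed.

Section TriangleGraph.

Variables (A B C : pt) (m : nat).
Hypothesis HABC : orient A B C <> 0.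
Hypothesis Hm : (2 <= m)%nat.

Let Hm1 : (1 <= m)%nat.
Proof. lia. Qed.

Definition in_tri_cell (q : pt) (i j k : nat) :=
  in_cell m (bcA A B C m q) (bcB A B C m q) (bcC A B C m q) i j k.

Definition on_tri_graph (q : pt) :=
  exists w b s, tri_edge A B C m w b /\ 0 <= s <= 1 /\ q = seg w b s.

Lemma bary_pt_in_tri x y z : x + y + z = INR m -> 0 <= x -> 0 <= y -> 0 <= z ->
  in_tri A B C m (bary_pt A B C m x y z).
Proof.
  intros Hs Hx Hy Hz. unfold in_tri.
  rewrite bcA_bary_pt, bcB_bary_pt, bcC_bary_pt by auto. auto.
Qed.

Lemma tie_bary_pt_not_in_cell x y z i1 j1 k1 i2 j2 k2 i j k :
  x + y + z = INR m -> (i2 + j2 + k2 = m)%nat -> (i1, j1, k1) <> (i2, j2, k2) ->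
  in_closed_cell m x y z i1 j1 k1 -> sqdist3 x y z i1 j1 k1 = sqdist3 x y z i2 j2 k2 ->
  ~ in_tri_cell (bary_pt A B C m x y z) i j k.
Proof.
  intros Hs. unfold in_tri_cell.
  rewrite bcA_bary_pt, bcB_bary_pt, bcC_bary_pt by auto. apply tie_not_in_cell.
Qed.

Ltac tie_with i1 j1 k1 i2 j2 k2 :=
  apply (tie_bary_pt_not_in_cell _ _ _ i1 j1 k1 i2 j2 k2);
  [ lra | lia | let E := fresh "E" in intro E; injection E; lia
  | split; [lia | rewrite ?S_INR; simpl INR; repeat split; lra]
  | unfold sqdist3; rewrite ?S_INR; simpl INR; ring ].

(* Every edge of the graph lies on the common boundary of two adjacent cells. *)
Lemma tri_graph_point q : on_tri_graph q ->
  in_tri A B C m q /\ forall i j k, ~ in_tri_cell q i j k.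
Proof.
  intros [w [b [s [[i [j [k [Hs [-> Hcase]]]]] [Hs01 ->]]]]].
  pose proof (INR_sum3_pred i j k m Hm1 Hs) as HI.
  pose proof (pos_INR i); pose proof (pos_INR j); pose proof (pos_INR k).
  rewrite white_node_bary by auto.
  destruct Hcase as [[i' [j' [k' [Hs' [Hc ->]]]]] | [[-> ->] | [[-> ->] | [-> ->]]]].
  - rewrite down_node_bary, seg_bary_pt by auto.
    pose proof (pos_INR i'); pose proof (pos_INR j'); pose proof (pos_INR k').
    destruct Hc as [[-> [-> ->]] | [[-> [-> ->]] | [-> [-> ->]]]]; rewrite ?S_INR in *;
      (split; [apply bary_pt_in_tri; lra | intros i0 j0 k0]).
    + tie_with (S i') (S j') k' (S i') j' (S k').
    + tie_with (S i') (S j') k' i' (S j') (S k').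
    + tie_with (S i') j' (S k') i' (S j') (S k').
  - rewrite sideAB_node_bary, seg_bary_pt by auto. simpl INR in *.
    split; [apply bary_pt_in_tri; lra | intros i0 j0 k0]. tie_with (S i) j 0%nat i (S j) 0%nat.
  - rewrite sideAC_node_bary, seg_bary_pt by auto. simpl INR in *.
    split; [apply bary_pt_in_tri; lra | intros i0 j0 k0]. tie_with (S i) 0%nat k i 0%nat (S k).
  - rewrite sideBC_node_bary, seg_bary_pt by auto. simpl INR in *.
    split; [apply bary_pt_in_tri; lra | intros i0 j0 k0]. tie_with 0%nat (S j) k 0%nat j (S k).
Qed.

Lemma on_tri_graph_intro w b s x y z : tri_edge A B C m w b -> 0 <= s <= 1 ->
  seg w b s = bary_pt A B C m x y z -> on_tri_graph (bary_pt A B C m x y z).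
Proof. intros He Hs E. exists w, b, s. auto. Qed.

Lemma white_down_edge i j k i' j' k' : (i + j + k = m - 1)%nat -> (i' + j' + k' = m - 2)%nat ->
  (i = S i' /\ j = j' /\ k = k') \/ (i = i' /\ j = S j' /\ k = k') \/ (i = i' /\ j = j' /\ k = S k') ->
  tri_edge A B C m (white_node A B C m i j k) (down_node A B C m i' j' k').
Proof.
  intros Hs Hs' Hc. exists i, j, k. split; [exact Hs|split; [reflexivity|]]. left.
  exists i', j', k'. auto.
Qed.

Ltac graph_seg w b s :=
  change (INR 0) with 0 in *; rewrite ?S_INR in *; right; apply (on_tri_graph_intro w b s); [ | lra |
    rewrite ?white_node_bary, ?down_node_bary, ?sideAB_node_bary, ?sideAC_node_bary,
      ?sideBC_node_bary, seg_bary_pt by auto; f_equal; rewrite ?S_INR; simpl INR; nra ].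

Lemma upward_cover X Y Z i j k : X + Y + Z = INR m -> (i + j + k = m - 1)%nat ->
  INR i <= X < INR i + 1 -> INR j <= Y < INR j + 1 -> INR k <= Z < INR k + 1 ->
  (exists i' j' k', in_cell m X Y Z i' j' k') \/ on_tri_graph (bary_pt A B C m X Y Z).
Proof.
  intros Hs Hijk Hi Hj Hk. pose proof (INR_sum3_pred i j k m Hm1 Hijk).
  destruct (max3_cases (X - INR i) (Y - INR j) (Z - INR k)) as [Hx|[Hx|[Hx|[Hx|[Hx|Hx]]]]].
  - left. exists (S i), j, k. split; [lia|]. rewrite S_INR. lra.
  - left. exists i, (S j), k. split; [lia|]. rewrite S_INR. lra.
  - left. exists i, j, (S k). split; [lia|]. rewrite S_INR. lra.
  - destruct k as [|k'].
    + graph_seg (white_node A B C m i j 0) (sideAB_node A B C m i j) (6 * (X - INR i) - 2).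
      exists i, j, 0%nat. split; [lia|]. split; [reflexivity|]. right; left. auto.
    + graph_seg (white_node A B C m i j (S k')) (down_node A B C m i j k') (3 * (X - INR i) - 1).
      apply white_down_edge; lia.
  - destruct j as [|j'].
    + graph_seg (white_node A B C m i 0 k) (sideAC_node A B C m i k) (6 * (X - INR i) - 2).
      exists i, 0%nat, k. split; [lia|]. split; [reflexivity|]. right; right; left. auto.
    + graph_seg (white_node A B C m i (S j') k) (down_node A B C m i j' k) (3 * (X - INR i) - 1).
      apply white_down_edge; lia.
  - destruct i as [|i'].
    + graph_seg (white_node A B C m 0 j k) (sideBC_node A B C m j k) (6 * (Y - INR j) - 2).
      exists 0%nat, j, k. split; [lia|]. split; [reflexivity|]. right; right; right. auto.
    + graph_seg (white_node A B C m (S i') j k) (down_node A B C m i' j k) (3 * (Y - INR j) - 1).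
      apply white_down_edge; lia.
Qed.

Lemma downward_cover X Y Z i j k : X + Y + Z = INR m -> (i + j + k = m - 2)%nat ->
  INR i <= X < INR i + 1 -> INR j <= Y < INR j + 1 -> INR k <= Z < INR k + 1 ->
  (exists i' j' k', in_cell m X Y Z i' j' k') \/ on_tri_graph (bary_pt A B C m X Y Z).
Proof.
  intros Hs Hijk Hi Hj Hk. pose proof (INR_sum3_pred2 i j k m Hm Hijk).
  destruct (min3_cases (X - INR i) (Y - INR j) (Z - INR k)) as [Hx|[Hx|[Hx|[Hx|[Hx|Hx]]]]].
  - left. exists i, (S j), (S k). split; [lia|]. rewrite !S_INR. lra.
  - left. exists (S i), j, (S k). split; [lia|]. rewrite !S_INR. lra.
  - left. exists (S i), (S j), k. split; [lia|]. rewrite !S_INR. lra.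
  - graph_seg (white_node A B C m i j (S k)) (down_node A B C m i j k) (3 * (X - INR i) - 1).
    apply white_down_edge; lia.
  - graph_seg (white_node A B C m i (S j) k) (down_node A B C m i j k) (3 * (X - INR i) - 1).
    apply white_down_edge; lia.
  - graph_seg (white_node A B C m (S i) j k) (down_node A B C m i j k) (3 * (Y - INR j) - 1).
    apply white_down_edge; lia.
Qed.

Lemma in_tri_cell_or_graph q : in_tri A B C m q ->
  (exists i j k, in_tri_cell q i j k) \/ on_tri_graph q.
Proof.
  intros [HX [HY HZ]]. unfold in_tri_cell.
  pose proof (bc_sum A B C m HABC q) as Hs. pose proof (bary_pt_bc A B C m Hm1 HABC q) as Hq.
  set (X := bcA A B C m q) in *. set (Y := bcB A B C m q) in *. set (Z := bcC A B C m q) in *.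
  rewrite <- Hq.
  destruct (floor_nat X HX) as [i Hi]. destruct (floor_nat Y HY) as [j Hj].
  destruct (floor_nat Z HZ) as [k Hk].
  assert (Hc : (i + j + k = m \/ i + j + k = m - 1 \/ i + j + k = m - 2)%nat).
  { assert (INR (i + j + k) <= INR m < INR (i + j + k) + 3) by (rewrite !plus_INR; lra).
    assert (i + j + k <= m /\ m < i + j + k + 3)%nat as [H1 H2].
    { split; [apply INR_le | apply INR_lt; rewrite plus_INR; simpl (INR 3)]; lra. }
    lia. }
  destruct Hc as [Hc|[Hc|Hc]].
  - left. exists i, j, k. split; [lia|]. apply INR_sum3 in Hc. lra.
  - apply (upward_cover X Y Z i j k); auto.
  - apply (downward_cover X Y Z i j k); auto.
Qed.

End TriangleGraph.

(** * Openness and convexity of cells *)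

Definition affine_map (f : pt -> R) := exists al be : R, forall q q',
  f q' - f q = al * (fst q' - fst q) + be * (snd q' - snd q).

Definition near (d : R) (q q' : pt) := Rabs (fst q' - fst q) < d /\ Rabs (snd q' - snd q) < d.

Definition eventually_near (q : pt) (P : pt -> Prop) :=
  exists d, 0 < d /\ forall q', near d q q' -> P q'.

Lemma affine_combination (f g : pt -> R) (a b c : R) : affine_map f -> affine_map g ->
  affine_map (fun q => a * f q + b * g q + c).
Proof.
  intros [a1 [b1 H1]] [a2 [b2 H2]]. exists (a * a1 + b * a2), (a * b1 + b * b2).
  intros q q'. specialize (H1 q q'); specialize (H2 q q'). nra.
Qed.

Lemma affine_seg f q1 q2 s : affine_map f -> f (seg q1 q2 s) = f q1 + s * (f q2 - f q1).
Proof.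
  intros [al [be H]]. pose proof (H q1 (seg q1 q2 s)) as E1. pose proof (H q1 q2) as E2.
  assert (E : f (seg q1 q2 s) - f q1 = s * (f q2 - f q1)) by (rewrite E1, E2; unfold seg; simpl; ring).
  lra.
Qed.

Lemma near_le d d' q q' : d <= d' -> near d q q' -> near d' q q'.
Proof. unfold near; intros; lra. Qed.

Lemma eventually_near_and q (P Q : pt -> Prop) :
  eventually_near q P -> eventually_near q Q -> eventually_near q (fun x => P x /\ Q x).
Proof.
  intros [d1 [H1 P1]] [d2 [H2 P2]]. exists (Rmin d1 d2). split; [apply Rmin_pos; auto|].
  intros q' Hn. split; [apply P1 | apply P2]; eapply near_le; eauto; [apply Rmin_l | apply Rmin_r].
Qed.

Lemma eventually_near_impl q (P Q : pt -> Prop) :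
  (forall x, P x -> Q x) -> eventually_near q P -> eventually_near q Q.
Proof. intros H [d [Hd P1]]. exists d. auto. Qed.

Lemma affine_pos_near f q : affine_map f -> 0 < f q -> eventually_near q (fun x => 0 < f x).
Proof.
  intros [al [be H]] Hf.
  set (K := Rabs al + Rabs be + 1).
  assert (HK : 0 < K) by (unfold K; pose proof (Rabs_pos al); pose proof (Rabs_pos be); lra).
  exists (f q / K). split; [apply Rdiv_lt_0_compat; auto|].
  intros q' [H1 H2]. specialize (H q q').
  assert (E1 : Rabs (al * (fst q' - fst q)) <= Rabs al * (f q / K)).
  { rewrite Rabs_mult. apply Rmult_le_compat_l; [apply Rabs_pos | lra]. }
  assert (E2 : Rabs (be * (snd q' - snd q)) <= Rabs be * (f q / K)).
  { rewrite Rabs_mult. apply Rmult_le_compat_l; [apply Rabs_pos | lra]. }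
  assert (E3 : (Rabs al + Rabs be) * (f q / K) < f q).
  { assert (0 < f q / K) by (apply Rdiv_lt_0_compat; auto).
    replace ((Rabs al + Rabs be) * (f q / K)) with (f q - f q / K) by (unfold K in *; field; lra).
    lra. }
  pose proof (Rle_abs (- (al * (fst q' - fst q)))). pose proof (Rle_abs (- (be * (snd q' - snd q)))).
  rewrite Rabs_Ropp in *. lra.
Qed.

Lemma affine_lt_near f c q : affine_map f -> f q < c -> eventually_near q (fun x => f x < c).
Proof.
  intros Hf Hq. apply (eventually_near_impl q (fun x => 0 < (-1) * f x + 0 * f x + c)).
  - intros x. lra.
  - apply affine_pos_near; [apply affine_combination; auto | lra].
Qed.

Lemma affine_gt_near f c q : affine_map f -> c < f q -> eventually_near q (fun x => c < f x).
Proof.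
  intros Hf Hq. apply (eventually_near_impl q (fun x => 0 < 1 * f x + 0 * f x - c)).
  - intros x. lra.
  - apply affine_pos_near; [apply affine_combination; auto | lra].
Qed.

Lemma affine_interval_near f c1 c2 q : affine_map f -> c1 < f q < c2 ->
  eventually_near q (fun x => c1 < f x < c2).
Proof. intros Hf [H1 H2]. apply eventually_near_and; [apply affine_gt_near | apply affine_lt_near]; auto. Qed.

Lemma convex_interval a b s : 0 <= s <= 1 -> -1 < a < 1 -> -1 < b < 1 -> -1 < a + s * (b - a) < 1.
Proof.
  intros Hs Ha Hb.
  pose proof (Rmult_le_pos s (1 - b) (proj1 Hs) ltac:(lra)).
  pose proof (Rmult_le_pos (1 - s) (1 - a) ltac:(lra) ltac:(lra)).
  pose proof (Rmult_le_pos s (b + 1) (proj1 Hs) ltac:(lra)).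
  pose proof (Rmult_le_pos (1 - s) (a + 1) ltac:(lra) ltac:(lra)).
  split; nra.
Qed.

Section Openness.

Variables (A B C : pt) (m : nat).
Hypothesis HABC : orient A B C <> 0.

Lemma bcA_affine : affine_map (bcA A B C m).
Proof.
  unfold bcA, orient in *; destruct A as [ax ay], B as [bx by0], C as [cx cy]; simpl in *.
  exists (INR m * (by0 - cy) / ((bx - ax) * (cy - ay) - (by0 - ay) * (cx - ax))),
         (INR m * (cx - bx) / ((bx - ax) * (cy - ay) - (by0 - ay) * (cx - ax))).
  intros [qx qy] [qx' qy']. simpl. field. auto.
Qed.

Lemma bcB_affine : affine_map (bcB A B C m).
Proof.
  unfold bcB, orient in *; destruct A as [ax ay], B as [bx by0], C as [cx cy]; simpl in *.
  exists (INR m * (cy - ay) / ((bx - ax) * (cy - ay) - (by0 - ay) * (cx - ax))),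
         (INR m * (ax - cx) / ((bx - ax) * (cy - ay) - (by0 - ay) * (cx - ax))).
  intros [qx qy] [qx' qy']. simpl. field. auto.
Qed.

Lemma bcC_affine : affine_map (bcC A B C m).
Proof.
  unfold bcC, orient in *; destruct A as [ax ay], B as [bx by0], C as [cx cy]; simpl in *.
  exists (INR m * (ay - by0) / ((bx - ax) * (cy - ay) - (by0 - ay) * (cx - ax))),
         (INR m * (bx - ax) / ((bx - ax) * (cy - ay) - (by0 - ay) * (cx - ax))).
  intros [qx qy] [qx' qy']. simpl. field. auto.
Qed.

Lemma in_tri_cell_near q i j k : in_tri_cell A B C m q i j k ->
  eventually_near q (fun x => in_tri_cell A B C m x i j k).
Proof.
  intros [Hs [H1 [H2 H3]]].
  pose proof bcA_affine as fA. pose proof bcB_affine as fB. pose proof bcC_affine as fC.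
  destruct (eventually_near_and _ _ _
    (affine_interval_near _ (-1) 1 q (affine_combination _ _ 1 (-1) (INR j - INR i) fA fB) ltac:(cbv beta; lra))
    (eventually_near_and _ _ _
      (affine_interval_near _ (-1) 1 q (affine_combination _ _ 1 (-1) (INR k - INR i) fA fC) ltac:(cbv beta; lra))
      (affine_interval_near _ (-1) 1 q (affine_combination _ _ 1 (-1) (INR k - INR j) fB fC) ltac:(cbv beta; lra))))
    as [d [Hd P]].
  exists d. split; auto. intros q' Hq'. destruct (P q' Hq') as [P1 [P2 P3]].
  split; auto. lra.
Qed.

Lemma not_in_tri_near q : ~ in_tri A B C m q -> eventually_near q (fun x => ~ in_tri A B C m x).
Proof.
  intros Hout. unfold in_tri in *.
  destruct (Rlt_le_dec (bcA A B C m q) 0) as [N|N].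
  { apply (eventually_near_impl _ _ _ (fun x Hx H => Rlt_not_le _ _ Hx (proj1 H))).
    apply affine_lt_near; auto using bcA_affine. }
  destruct (Rlt_le_dec (bcB A B C m q) 0) as [N'|N'].
  { apply (eventually_near_impl _ _ _ (fun x Hx H => Rlt_not_le _ _ Hx (proj1 (proj2 H)))).
    apply affine_lt_near; auto using bcB_affine. }
  destruct (Rlt_le_dec (bcC A B C m q) 0) as [N''|N''].
  { apply (eventually_near_impl _ _ _ (fun x Hx H => Rlt_not_le _ _ Hx (proj2 (proj2 H)))).
    apply affine_lt_near; auto using bcC_affine. }
  tauto.
Qed.

Lemma in_tri_seg q1 q2 s : 0 <= s <= 1 ->
  in_tri A B C m q1 -> in_tri A B C m q2 -> in_tri A B C m (seg q1 q2 s).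
Proof.
  intros Hs [H1 [H2 H3]] [H1' [H2' H3']]. unfold in_tri.
  rewrite !affine_seg by auto using bcA_affine, bcB_affine, bcC_affine.
  split; [|split]; nra.
Qed.

Lemma in_tri_cell_seg q1 q2 s i j k : 0 <= s <= 1 ->
  in_tri_cell A B C m q1 i j k -> in_tri_cell A B C m q2 i j k ->
  in_tri_cell A B C m (seg q1 q2 s) i j k.
Proof.
  intros Hs [Hsum [H1 [H2 H3]]] [_ [H1' [H2' H3']]].
  unfold in_tri_cell, in_cell.
  rewrite !affine_seg by auto using bcA_affine, bcB_affine, bcC_affine.
  pose proof (convex_interval _ _ s Hs H1 H1'). pose proof (convex_interval _ _ s Hs H2 H2').
  pose proof (convex_interval _ _ s Hs H3 H3').
  split; [auto|]. split; [|split]; lra.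
Qed.

End Openness.

(** * Crossing an edge of the graph *)

(* The points just beside the midpoint of the edge (w, b) probed by [arrow_end]:
   sg = 1 on the left of the edge oriented from w to b, sg = -1 on its right. *)
Definition arrow_pt (w b : pt) (sg eps : R) : pt :=
  ((fst w + fst b) / 2 + sg * eps * (- (snd b - snd w)),
   (snd w + snd b) / 2 + sg * eps * (fst b - fst w)).

Lemma affine_arrow_pt (f : pt -> R) al be w b sg eps :
  (forall q q', f q' - f q = al * (fst q' - fst q) + be * (snd q' - snd q)) ->
  f (arrow_pt w b sg eps) =
  f w + (f b - f w) / 2 + sg * eps * (al * (- (snd b - snd w)) + be * (fst b - fst w)).
Proof.
  intros H. pose proof (H w (arrow_pt w b sg eps)). pose proof (H w b).
  unfold arrow_pt in *; simpl in *. lra.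
Qed.

Lemma affine_cross_deriv_nonzero (f : pt -> R) al be w b q q' :
  (forall q q', f q' - f q = al * (fst q' - fst q) + be * (snd q' - snd q)) ->
  f w = f b -> w <> b -> f q <> f q' -> al * (- (snd b - snd w)) + be * (fst b - fst w) <> 0.
Proof.
  intros Hf Hwb Hne Hqq E.
  pose proof (Hf w b) as H1. pose proof (Hf q q') as H2.
  set (dx := fst b - fst w) in *. set (dy := snd b - snd w) in *.
  assert (Hd : dx * dx + dy * dy <> 0).
  { intros Hd. assert (dx = 0 /\ dy = 0) as [E1 E2] by (split; nra).
    apply Hne. unfold dx, dy in *. destruct w, b; simpl in *. f_equal; lra. }
  assert (Hwb' : al * dx + be * dy = 0) by lra.
  assert (al = 0 /\ be = 0) as [-> ->].
  { split; apply (Rmult_eq_reg_l (dx * dx + dy * dy)); auto.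
    - replace ((dx * dx + dy * dy) * al) with (dx * (al * dx + be * dy) - dy * (al * - dy + be * dx))
        by ring. rewrite Hwb', E. ring.
    - replace ((dx * dx + dy * dy) * be) with (dy * (al * dx + be * dy) + dx * (al * - dy + be * dx))
        by ring. rewrite Hwb', E. ring. }
  apply Hqq. lra.
Qed.

Lemma Rabs_sign (sg : R) : sg = 1 \/ sg = -1 -> Rabs sg = 1.
Proof. intros [-> | ->]; unfold Rabs; destruct Rcase_abs; lra. Qed.

Lemma small_perturbation sg eps K c : (sg = 1 \/ sg = -1) -> 0 < K -> 0 < eps < / (12 * K) ->
  Rabs c <= K -> -/12 < sg * eps * c < /12.
Proof.
  intros Hsg HK [He1 He2] Hc. apply (Rmult_lt_compat_r (12 * K)) in He2; [|lra].
  rewrite Rinv_l in He2 by lra.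
  assert (Hlt : Rabs (sg * eps * c) < /12).
  { rewrite !Rabs_mult, Rabs_sign, (Rabs_right eps) by (auto; lra). pose proof (Rabs_pos c). nra. }
  apply Rabs_def2 in Hlt. lra.
Qed.

Section Arrows.

Variables (A B C : pt) (m : nat).
Hypothesis HABC : orient A B C <> 0.
Hypothesis Hm : (2 <= m)%nat.

Let Hm1 : (1 <= m)%nat.
Proof. lia. Qed.

(* Crossing the edge (w, b) near its midpoint leads from the cell of
   (i1, j1, k1) on one side to the cell of (i2, j2, k2) on the other side; the
   sign of kap tells which side is which. *)
Definition edge_separates (w b : pt) (i1 j1 k1 i2 j2 k2 : nat) : Prop :=
  exists kap, kap <> 0 /\ forall sg, (sg = 1 \/ sg = -1) -> exists eps0, 0 < eps0 /\
    forall eps, 0 < eps < eps0 ->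
      in_tri A B C m (arrow_pt w b sg eps) /\
      (sg * kap > 0 -> in_tri_cell A B C m (arrow_pt w b sg eps) i1 j1 k1) /\
      (sg * kap < 0 -> in_tri_cell A B C m (arrow_pt w b sg eps) i2 j2 k2).

Lemma edge_separates_side1 w b i1 j1 k1 i2 j2 k2 : edge_separates w b i1 j1 k1 i2 j2 k2 ->
  exists sg, (sg = 1 \/ sg = -1) /\ exists eps0, 0 < eps0 /\ forall eps, 0 < eps < eps0 ->
    in_tri A B C m (arrow_pt w b sg eps) /\ in_tri_cell A B C m (arrow_pt w b sg eps) i1 j1 k1.
Proof.
  intros [kap [Hk H]]. set (sg := if Rlt_dec 0 kap then 1 else -1).
  assert (Hsg : sg = 1 \/ sg = -1) by (unfold sg; destruct Rlt_dec; auto).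
  assert (Hpos : sg * kap > 0) by (unfold sg; destruct Rlt_dec; lra).
  exists sg. split; auto. destruct (H sg Hsg) as [e0 [He0 P]]. exists e0. split; auto.
  intros eps Heps. destruct (P eps Heps) as [P1 [P2 _]]. auto.
Qed.

Lemma edge_separates_side2 w b i1 j1 k1 i2 j2 k2 : edge_separates w b i1 j1 k1 i2 j2 k2 ->
  exists sg, (sg = 1 \/ sg = -1) /\ exists eps0, 0 < eps0 /\ forall eps, 0 < eps < eps0 ->
    in_tri A B C m (arrow_pt w b sg eps) /\ in_tri_cell A B C m (arrow_pt w b sg eps) i2 j2 k2.
Proof.
  intros [kap [Hk H]]. set (sg := if Rlt_dec 0 kap then -1 else 1).
  assert (Hsg : sg = 1 \/ sg = -1) by (unfold sg; destruct Rlt_dec; auto).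
  assert (Hneg : sg * kap < 0) by (unfold sg; destruct Rlt_dec; lra).
  exists sg. split; auto. destruct (H sg Hsg) as [e0 [He0 P]]. exists e0. split; auto.
  intros eps Heps. destruct (P eps Heps) as [P1 [_ P3]]. auto.
Qed.

Lemma sideAB_edge_separates i j : (i + j = m - 1)%nat ->
  edge_separates (white_node A B C m i j 0) (sideAB_node A B C m i j) (S i) j 0 i (S j) 0.
Proof.
  intros Hij. pose proof (INR_sum3_pred i j 0 m Hm1 ltac:(lia)) as HI. simpl INR in HI.
  set (w := white_node A B C m i j 0). set (b := sideAB_node A B C m i j).
  destruct (bcA_affine A B C m HABC) as [ax [bx Hx]].
  destruct (bcB_affine A B C m HABC) as [ay [by0 Hy]].
  destruct (bcC_affine A B C m HABC) as [az [bz Hz]].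
  assert (Ww : bcA A B C m w = INR i + /3 /\ bcB A B C m w = INR j + /3 /\ bcC A B C m w = /3).
  { unfold w. rewrite white_node_bary by auto. simpl INR.
    rewrite bcA_bary_pt, bcB_bary_pt, bcC_bary_pt; auto; lra. }
  assert (Wb : bcA A B C m b = INR i + /2 /\ bcB A B C m b = INR j + /2 /\ bcC A B C m b = 0).
  { unfold b. rewrite sideAB_node_bary by auto.
    rewrite bcA_bary_pt, bcB_bary_pt, bcC_bary_pt; auto; lra. }
  set (dir := fun al be => al * (- (snd b - snd w)) + be * (fst b - fst w)).
  exists (dir ax bx - dir ay by0). split.
  { (* bcA - bcB is constant along the edge but not on the side AB *)
    replace (dir ax bx - dir ay by0) with (dir (ax - ay) (bx - by0)) by (unfold dir; ring).
    apply (affine_cross_deriv_nonzero (fun q => bcA A B C m q - bcB A B C m q) _ _ w b A B).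
    - intros q q'. pose proof (Hx q q'). pose proof (Hy q q'). lra.
    - lra.
    - intros E. rewrite E in Ww. lra.
    - unfold bcA, bcB. rewrite !orient_same12. pose proof (lt_0_INR m ltac:(lia)).
      replace (INR m * orient A B C / orient A B C) with (INR m) by (field; auto). lra. }
  intros sg Hsg.
  set (K := Rabs (dir ax bx) + Rabs (dir ay by0) + Rabs (dir az bz) + 1).
  pose proof (Rabs_pos (dir ax bx)); pose proof (Rabs_pos (dir ay by0)); pose proof (Rabs_pos (dir az bz)).
  assert (HK : 0 < K) by (unfold K; lra).
  exists (/ (12 * K)). split; [apply Rinv_0_lt_compat; lra|].
  intros eps Heps.
  pose proof (small_perturbation sg eps K) as Hsmall.
  set (X := arrow_pt w b sg eps).
  destruct (sideAB_midpoint_cells m i j (bcA A B C m X) (bcB A B C m X) (bcC A B C m X) (sg * eps * dir ax bx) (sg * eps * dir ay by0) (sg * eps * dir az bz))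
    as [Hin [Hc1 Hc2]]; try lia;
    [ unfold X, dir; rewrite (affine_arrow_pt _ ax bx w b sg eps Hx); lra
    | unfold X, dir; rewrite (affine_arrow_pt _ ay by0 w b sg eps Hy); lra
    | unfold X, dir; rewrite (affine_arrow_pt _ az bz w b sg eps Hz); lra
    | apply Hsmall; auto; unfold K; lra .. | ].
  split; [exact Hin|]. split; intros Hk; [apply Hc1 | apply Hc2];
    replace (sg * eps * dir ax bx) with (sg * eps * dir ay by0 + eps * (sg * (dir ax bx - dir ay by0))) by ring;
    [assert (0 < eps * (sg * (dir ax bx - dir ay by0))) | assert (eps * (sg * (dir ax bx - dir ay by0)) < 0)];
    try nra.
Qed.

End Arrows.

Section Rotation.

Variables (A B C : pt) (m : nat).

Lemma bcA_rot q : bcA B C A m q = bcB A B C m q.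
Proof. unfold bcA, bcB. rewrite (orient_rot A B C), (orient_rot A q C). reflexivity. Qed.

Lemma bcB_rot q : bcB B C A m q = bcC A B C m q.
Proof. unfold bcB, bcC. rewrite (orient_rot A B C), (orient_rot A B q). reflexivity. Qed.

Lemma bcC_rot q : bcC B C A m q = bcA A B C m q.
Proof. unfold bcC, bcA. rewrite (orient_rot A B C), (orient_rot q B C). reflexivity. Qed.

Lemma in_tri_rot q : in_tri B C A m q -> in_tri A B C m q.
Proof. unfold in_tri. rewrite bcA_rot, bcB_rot, bcC_rot. tauto. Qed.

Lemma in_tri_cell_rot q i j k : in_tri_cell B C A m q i j k -> in_tri_cell A B C m q k i j.
Proof.
  unfold in_tri_cell. rewrite bcA_rot, bcB_rot, bcC_rot.
  intros [Hs [H1 [H2 H3]]]. split; [lia | lra].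
Qed.

Lemma white_node_rot i j k : white_node B C A m j k i = white_node A B C m i j k.
Proof. unfold white_node, bary. f_equal; unfold Rdiv; ring. Qed.

Lemma sideAB_node_rot_BC j k : sideAB_node B C A m j k = sideBC_node A B C m j k.
Proof. unfold sideAB_node, sideBC_node, bary. f_equal; unfold Rdiv; ring. Qed.

Lemma sideAB_node_rot_AC i k : sideAB_node C A B m k i = sideAC_node A B C m i k.
Proof. unfold sideAB_node, sideAC_node, bary. f_equal; unfold Rdiv; ring. Qed.

Lemma edge_separates_rot w b i1 j1 k1 i2 j2 k2 :
  edge_separates B C A m w b i1 j1 k1 i2 j2 k2 -> edge_separates A B C m w b k1 i1 j1 k2 i2 j2.
Proof.
  intros [kap [Hk H]]. exists kap. split; auto. intros sg Hsg.
  destruct (H sg Hsg) as [e0 [He0 P]]. exists e0. split; auto. intros eps Heps.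
  destruct (P eps Heps) as [P1 [P2 P3]].
  split; [apply in_tri_rot; auto|]. split; intros; apply in_tri_cell_rot; auto.
Qed.

End Rotation.

Section OtherSides.

Variables (A B C : pt) (m : nat).
Hypothesis HABC : orient A B C <> 0.
Hypothesis Hm : (2 <= m)%nat.

Lemma sideBC_edge_separates j k : (j + k = m - 1)%nat ->
  edge_separates A B C m (white_node A B C m 0 j k) (sideBC_node A B C m j k) 0 (S j) k 0 j (S k).
Proof.
  intros Hjk. rewrite <- white_node_rot, <- sideAB_node_rot_BC.
  apply edge_separates_rot, sideAB_edge_separates; auto. rewrite orient_rot; auto.
Qed.

Lemma sideAC_edge_separates i k : (i + k = m - 1)%nat ->
  edge_separates A B C m (white_node A B C m i 0 k) (sideAC_node A B C m i k) i 0 (S k) (S i) 0 k.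
Proof.
  intros Hik. rewrite <- white_node_rot, <- white_node_rot, <- sideAB_node_rot_AC.
  apply edge_separates_rot, edge_separates_rot, sideAB_edge_separates; auto; [|lia].
  rewrite (orient_rot B C A), (orient_rot A B C); auto.
Qed.

End OtherSides.

(** * The fan triangulation *)

Lemma orient_bary_pt X Y A B C m x y z : (1 <= m)%nat -> x + y + z = INR m ->
  orient X Y (bary_pt A B C m x y z) =
  (x * orient X Y A + y * orient X Y B + z * orient X Y C) / INR m.
Proof.
  intros Hm Hs. pose proof (not_0_INR m ltac:(lia)).
  destruct X, Y, A, B, C. unfold bary_pt, bary, orient; simpl. rewrite <- Hs. field. lra.
Qed.

Lemma mod_sub x n : (n <= x < 2 * n)%nat -> (x mod n = x - n)%nat.
Proof.
  intros H. replace x with ((x - n) + 1 * n)%nat at 1 by lia.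
  rewrite Nat.Div0.mod_add. apply Nat.mod_small. lia.
Qed.

Lemma sum_f_R0_lin (l u v : nat -> R) c0 c1 c2 N :
  sum_f_R0 (fun i => l i * (c0 + c1 * u i + c2 * v i)) N =
  c0 * sum_f_R0 l N + c1 * sum_f_R0 (fun i => l i * u i) N + c2 * sum_f_R0 (fun i => l i * v i) N.
Proof. induction N; simpl; [ring | rewrite IHN; ring]. Qed.

Lemma sum_f_R0_nonneg (f : nat -> R) N :
  (forall i, (i <= N)%nat -> 0 <= f i) -> 0 <= sum_f_R0 f N.
Proof.
  induction N; intros H; simpl; [apply H; lia|].
  pose proof (H (S N) (le_n _)). assert (0 <= sum_f_R0 f N) by (apply IHN; auto). lra.
Qed.

Lemma in_polygon_half_plane n p q X Y sg : (1 <= n)%nat -> in_polygon n p q ->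
  (forall i, (i < n)%nat -> 0 <= sg * orient X Y (p i)) -> 0 <= sg * orient X Y q.
Proof.
  intros Hn [lam [Hl [Hs [Hx Hy]]]] H.
  set (c1 := - sg * (snd Y - snd X)). set (c2 := sg * (fst Y - fst X)).
  set (c0 := sg * (- (fst Y - fst X) * snd X + (snd Y - snd X) * fst X)).
  assert (E : forall r, sg * orient X Y r = c0 + c1 * fst r + c2 * snd r)
    by (intros r; unfold c0, c1, c2, orient; ring).
  rewrite E, Hx, Hy.
  replace c0 with (c0 * sum_f_R0 lam (n - 1)) by (rewrite Hs; ring).
  rewrite <- sum_f_R0_lin. apply sum_f_R0_nonneg. intros i Hi.
  apply Rmult_le_pos; [apply Hl; lia|]. rewrite <- E. apply H. lia.
Qed.

Lemma discrete_sign_change (f : nat -> R) N : (2 <= N)%nat -> 0 <= f 1%nat -> f N <= 0 ->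
  exists t, (1 <= t)%nat /\ (t < N)%nat /\ 0 <= f t /\ f (S t) <= 0.
Proof.
  induction N; intros HN H1 H2; [lia|].
  destruct (Nat.eq_dec N 1) as [->|Hne]; [exists 1%nat; auto|].
  destruct (Rle_dec (f N) 0) as [Hl|Hl].
  - destruct (IHN ltac:(lia) H1 Hl) as [t [? [? [? ?]]]]. exists t. repeat split; auto; lia.
  - exists N. repeat split; auto; lia || lra.
Qed.

Lemma sign_div_nonneg sg x N D : (sg = 1 \/ sg = -1) -> 0 <= x -> 0 <= sg * N -> sg * D > 0 ->
  0 <= x * N / D.
Proof.
  intros [-> | ->] Hx HN HD.
  - apply Rmult_le_pos; [nra|]. apply Rlt_le, Rinv_0_lt_compat; lra.
  - replace (x * N / D) with (x * (- N) / (- D)) by (field; lra).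
    apply Rmult_le_pos; [nra|]. apply Rlt_le, Rinv_0_lt_compat; lra.
Qed.

Lemma sum_f_R0_indicator (u N : nat) (c : R) (h : nat -> R) :
  sum_f_R0 (fun i => (if Nat.eqb i u then c else 0) * h i) N = if Nat.leb u N then c * h u else 0.
Proof.
  induction N; cbn [sum_f_R0]; [|rewrite IHN];
  repeat match goal with
  | |- context [Nat.eqb ?x ?y] => destruct (Nat.eqb_spec x y)
  | |- context [Nat.leb ?x ?y] => destruct (Nat.leb_spec x y)
  end; subst; try lia; ring.
Qed.

Lemma sum_f_R0_add3 (f g k h : nat -> R) N :
  sum_f_R0 (fun i => (f i + g i + k i) * h i) N =
  sum_f_R0 (fun i => f i * h i) N + sum_f_R0 (fun i => g i * h i) N + sum_f_R0 (fun i => k i * h i) N.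
Proof. induction N; simpl; [ring | rewrite IHN; ring]. Qed.

Lemma in_tri_in_polygon n p u1 u2 u3 m q : (u1 < n)%nat -> (u2 < n)%nat -> (u3 < n)%nat ->
  (1 <= m)%nat -> orient (p u1) (p u2) (p u3) <> 0 ->
  in_tri (p u1) (p u2) (p u3) m q -> in_polygon n p q.
Proof.
  intros H1 H2 H3 Hm HD [HX [HY HZ]].
  pose proof (lt_0_INR m ltac:(lia)) as Hm0.
  pose proof (bc_sum _ _ _ m HD q) as Hs. pose proof (bary_pt_bc _ _ _ m Hm HD q) as Hq.
  set (X := bcA (p u1) (p u2) (p u3) m q) in *. set (Y := bcB (p u1) (p u2) (p u3) m q) in *.
  set (Z := bcC (p u1) (p u2) (p u3) m q) in *.
  set (lam := fun i => (if Nat.eqb i u1 then X / INR m else 0) + (if Nat.eqb i u2 then Y / INR m else 0)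
                      + (if Nat.eqb i u3 then Z / INR m else 0)).
  assert (Hsum : forall h : nat -> R, sum_f_R0 (fun i => lam i * h i) (n - 1) =
            X / INR m * h u1 + Y / INR m * h u2 + Z / INR m * h u3).
  { intros h. unfold lam. rewrite sum_f_R0_add3, !sum_f_R0_indicator.
    repeat match goal with |- context [Nat.leb ?x ?y] => destruct (Nat.leb_spec x y) end;
      try lia; ring. }
  exists lam. split; [|split; [|split]].
  - intros i _. unfold lam.
    assert (0 <= X / INR m) by (apply Rmult_le_pos; [auto | apply Rlt_le, Rinv_0_lt_compat; auto]).
    assert (0 <= Y / INR m) by (apply Rmult_le_pos; [auto | apply Rlt_le, Rinv_0_lt_compat; auto]).
    assert (0 <= Z / INR m) by (apply Rmult_le_pos; [auto | apply Rlt_le, Rinv_0_lt_compat; auto]).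
    destruct (Nat.eqb i u1), (Nat.eqb i u2), (Nat.eqb i u3); lra.
  - rewrite (sum_eq _ (fun i => lam i * (fun _ => 1) i)) by (intros; ring).
    rewrite Hsum. field_simplify; [|lra]. rewrite Hs. field. lra.
  - rewrite Hsum, <- Hq at 1. unfold bary_pt, bary. simpl. field. lra.
  - rewrite Hsum, <- Hq at 1. unfold bary_pt, bary. simpl. field. lra.
Qed.

Lemma sideAB_node_eq_sideAC A B C D m i j : sideAB_node A C D m i j = sideAC_node A B C m i j.
Proof. unfold sideAB_node, sideAC_node, bary. f_equal; unfold Rdiv; ring. Qed.

Section FanVertices.

Variables (n : nat) (p : nat -> pt) (a : nat).
Hypothesis Ha : (a < n)%nat.

Definition vtx (u : nat) : pt := p ((a + u) mod n).

Lemma vtx0 : vtx 0 = p a.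
Proof. unfold vtx. rewrite Nat.add_0_r, Nat.mod_small; auto. Qed.

Lemma fan_tri_vtx t : fan_tri n p a t = (vtx 0, vtx t, vtx (S t)).
Proof. unfold fan_tri. rewrite vtx0. unfold vtx. do 3 f_equal. lia. Qed.

Lemma vtx_surj i : (i < n)%nat -> exists u, (u < n)%nat /\ p i = vtx u.
Proof.
  intros Hi. exists ((i + n - a) mod n)%nat. split; [apply Nat.mod_upper_bound; lia|].
  unfold vtx. rewrite Nat.Div0.add_mod_idemp_r.
  replace (a + (i + n - a))%nat with (i + 1 * n)%nat by lia.
  rewrite Nat.Div0.mod_add, Nat.mod_small; auto.
Qed.

Lemma convex_vtx_sign : convex_polygon n p ->
  exists sg, (sg = 1 \/ sg = -1) /\
    forall s u v, (s < u)%nat -> (u < v)%nat -> (v < n)%nat -> sg * orient (vtx s) (vtx u) (vtx v) > 0.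
Proof.
  intros [Hc|Hc]; [exists 1 | exists (-1)]; split; auto; intros s u v H1 H2 H3; unfold vtx.
  all: destruct (Nat.lt_ge_cases (a + s) n) as [Ws|Ws];
       destruct (Nat.lt_ge_cases (a + u) n) as [Wu|Wu];
       destruct (Nat.lt_ge_cases (a + v) n) as [Wv|Wv];
       try (exfalso; lia);
       rewrite ?(Nat.mod_small (a + s)), ?(Nat.mod_small (a + u)), ?(Nat.mod_small (a + v)) by lia;
       rewrite ?(mod_sub (a + s)), ?(mod_sub (a + u)), ?(mod_sub (a + v)) by lia.
  (* the indices, read cyclically, are a rotation of an increasing triple *)
  all: first
    [ specialize (Hc (a + s) (a + u) (a + v) ltac:(lia) ltac:(lia) ltac:(lia))%nat; lra
    | specialize (Hc (a + v - n) (a + s) (a + u) ltac:(lia) ltac:(lia) ltac:(lia))%nat;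
      rewrite <- (orient_rot (p (a + s)%nat)), <- (orient_rot (p (a + u)%nat)); lra
    | specialize (Hc (a + u - n) (a + v - n) (a + s) ltac:(lia) ltac:(lia) ltac:(lia))%nat;
      rewrite <- orient_rot; lra
    | specialize (Hc (a + s - n) (a + u - n) (a + v - n) ltac:(lia) ltac:(lia) ltac:(lia))%nat; lra ].
Qed.

End FanVertices.

Lemma continuity_pt_eps f x : continuity_pt f x -> forall eps, 0 < eps ->
  exists d, 0 < d /\ forall y, Rabs (y - x) < d -> Rabs (f y - f x) < eps.
Proof.
  intros H eps Heps. destruct (H eps Heps) as [d [Hd P]]. exists d. split; auto. intros y Hy.
  destruct (Req_dec y x) as [->|Hne].
  - rewrite Rminus_diag, Rabs_R0; auto.
  - apply P. split; [unfold D_x, no_cond; split; auto | exact Hy].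
Qed.

Lemma continuity_pt_locally_constant f x :
  (exists d, 0 < d /\ forall y, Rabs (y - x) < d -> f y = f x) -> continuity_pt f x.
Proof.
  intros [d [Hd H]] eps Heps. exists d. split; auto. intros y [_ Hy]. simpl in *. unfold R_dist in *.
  rewrite (H y Hy), Rminus_diag, Rabs_R0; auto.
Qed.

Definition clamp01 (s : R) := Rmax 0 (Rmin 1 s).

Lemma clamp01_range s : 0 <= clamp01 s <= 1.
Proof. unfold clamp01, Rmax, Rmin. repeat destruct Rle_dec; lra. Qed.

Lemma clamp01_id s : 0 <= s <= 1 -> clamp01 s = s.
Proof. intros. unfold clamp01, Rmax, Rmin. repeat destruct Rle_dec; lra. Qed.

Lemma clamp01_dist s x : 0 <= x <= 1 -> Rabs (clamp01 s - x) <= Rabs (s - x).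
Proof.
  intros. unfold clamp01, Rmax, Rmin. repeat destruct Rle_dec; unfold Rabs; repeat destruct Rcase_abs; lra.
Qed.

(* The polygonal path x -> y -> z, parametrised by s in [0, 1]; Rabs selects the leg. *)
Definition path2 (x y z : pt) (s : R) : pt :=
  (fst y + (2 * s - 1 - Rabs (2 * s - 1)) / 2 * (fst y - fst x)
          + (2 * s - 1 + Rabs (2 * s - 1)) / 2 * (fst z - fst y),
   snd y + (2 * s - 1 - Rabs (2 * s - 1)) / 2 * (snd y - snd x)
          + (2 * s - 1 + Rabs (2 * s - 1)) / 2 * (snd z - snd y)).

Lemma path2_first_leg x y z s : s <= 1/2 -> path2 x y z s = seg x y (2 * s).
Proof.
  intros Hs. unfold path2, seg. rewrite Rabs_left1 by lra. simpl. f_equal; field.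
Qed.

Lemma path2_second_leg x y z s : 1/2 <= s -> path2 x y z s = seg y z (2 * s - 1).
Proof.
  intros Hs. unfold path2, seg. rewrite Rabs_right by lra. simpl. f_equal; field.
Qed.

(** * Counting the interior lattice points *)

Section Counting.

Local Open Scope nat_scope.

Definition shift3 (d : nat * nat * nat) (e : nat * nat * nat) : nat * nat * nat :=
  let '(dx, dy, dz) := d in let '(x, y, z) := e in (dx + x, dy + y, dz + z).

Fixpoint compositions3 (N : nat) : list (nat * nat * nat) :=
  match N with
  | O => [(0, 0, 0)]
  | S N' => map (shift3 (1, 0, 0)) (compositions3 N') ++ map (fun y => (0, y, N' + 1 - y)) (seq 0 (S N))
  end.

Lemma compositions3_S N : compositions3 (S N) =
  map (shift3 (1, 0, 0)) (compositions3 N) ++ map (fun y => (0, y, N + 1 - y)) (seq 0 (S (S N))).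
Proof. reflexivity. Qed.

Lemma in_compositions3 N x y z : In (x, y, z) (compositions3 N) <-> x + y + z = N.
Proof.
  revert x y z. induction N as [|N IH]; intros x y z; [|rewrite compositions3_S].
  - simpl. split; [intros [E|[]]; injection E; lia|].
    intros H. left. repeat f_equal; lia.
  - rewrite in_app_iff, !in_map_iff. split.
    + intros [[[[x' y'] z'] [E Hin]] | [y' [E Hin]]].
      * simpl in E. injection E as <- <- <-. apply IH in Hin. lia.
      * injection E as <- <- <-. apply in_seq in Hin. lia.
    + intros H. destruct x as [|x].
      * right. exists y. split; [repeat f_equal; lia | apply in_seq; lia].
      * left. exists (x, y, z). split; [reflexivity | apply IH; lia].
Qed.

Lemma shift3_inj d : forall e e', shift3 d e = shift3 d e' -> e = e'.
Proof.
  destruct d as [[dx dy] dz]. intros [[x y] z] [[x' y'] z'] E. simpl in E.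
  injection E. intros. repeat f_equal; lia.
Qed.

Lemma NoDup_map_inj {A B : Type} (f : A -> B) l :
  (forall x y, f x = f y -> x = y) -> NoDup l -> NoDup (map f l).
Proof. intros Hf. apply NoDup_map_NoDup_ForallPairs. intros x y _ _. apply Hf. Qed.

Lemma NoDup_compositions3 N : NoDup (compositions3 N).
Proof.
  induction N as [|N IH]; [repeat constructor; auto|]. rewrite compositions3_S.
  apply NoDup_app.
  - apply NoDup_map_inj; [apply shift3_inj | exact IH].
  - apply NoDup_map_inj; [intros y y' E; injection E; auto | apply seq_NoDup].
  - intros e H1 H2. apply in_map_iff in H1 as [[[x y] z] [<- _]].
    apply in_map_iff in H2 as [y' [E _]]. discriminate.
Qed.

Lemma length_compositions3 N : 2 * length (compositions3 N) = (N + 1) * (N + 2).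
Proof.
  induction N as [|N IH]; [reflexivity|].
  rewrite compositions3_S, length_app, !length_map, length_seq. lia.
Qed.

Lemma NoDup_list_prod {A B : Type} (l : list A) (l' : list B) :
  NoDup l -> NoDup l' -> NoDup (list_prod l l').
Proof.
  induction l as [|x l IH]; intros H H'; simpl; [constructor|].
  inversion H as [|x0 l0 Hx Hl E]; subst. apply NoDup_app.
  - apply NoDup_map_inj; auto. intros u v E. injection E; auto.
  - apply IH; auto.
  - intros e G1 G2. apply in_map_iff in G1 as [y [<- _]].
    apply in_prod_iff in G2. tauto.
Qed.

(* Labels (t, (i, j, k)) of the lattice points i + j + k = m of the fan triangle t
   (barycentric coordinate i at the apex) lying off the boundary of the polygon,
   each counted once: a point on the diagonal shared by triangles t and t + 1 is
   labelled in triangle t (j = 0), and the apex is excluded. *)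
Definition internal_label (n m : nat) (e : nat * (nat * nat * nat)) : Prop :=
  let '(t, (i, j, k)) := e in
  (1 <= t) /\ (t <= n - 2) /\ (i + j + k = m) /\ (1 <= i) /\ (1 <= k) /\
  ((1 <= j) \/ (t <= n - 3)).

Definition internal_labels (n m : nat) : list (nat * (nat * nat * nat)) :=
  list_prod (seq 1 (n - 3)) (map (shift3 (1, 0, 1)) (compositions3 (m - 2))) ++
  map (pair (n - 2)) (if Nat.leb 3 m then map (shift3 (1, 1, 1)) (compositions3 (m - 3)) else []).

Lemma in_internal_labels n m e : (4 <= n) -> (2 <= m) ->
  In e (internal_labels n m) <-> internal_label n m e.
Proof.
  intros Hn Hm. destruct e as [t [[i j] k]]. unfold internal_labels, internal_label.
  rewrite in_app_iff, in_prod_iff, !in_map_iff, in_seq. split.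
  - intros [[Ht [[[x y] z] [E Hin]]] | [e' [E Hin]]].
    + simpl in E. injection E; intros; subst. apply in_compositions3 in Hin. lia.
    + injection E; intros; subst. destruct (Nat.leb_spec 3 m); [|destruct Hin].
      apply in_map_iff in Hin as [[[x y] z] [E' Hin]]. simpl in E'. injection E'; intros; subst.
      apply in_compositions3 in Hin. lia.
  - intros [H1 [H2 [H3 [H4 [H5 H6]]]]].
    destruct (Nat.le_gt_cases t (n - 3)) as [Ht|Ht].
    + left. split; [lia|]. exists (i - 1, j, k - 1).
      split; [simpl; repeat f_equal; lia | apply in_compositions3; lia].
    + right. exists (i, j, k). split; [f_equal; lia|].
      destruct (Nat.leb_spec 3 m); [|lia]. apply in_map_iff. exists (i - 1, j - 1, k - 1).
      split; [simpl; repeat f_equal; lia | apply in_compositions3; lia].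
Qed.

Lemma NoDup_internal_labels n m : NoDup (internal_labels n m).
Proof.
  unfold internal_labels. apply NoDup_app.
  - apply NoDup_list_prod; [apply seq_NoDup|].
    apply NoDup_map_inj; [apply shift3_inj | apply NoDup_compositions3].
  - apply NoDup_map_inj; [intros x y E; injection E; auto|].
    destruct (Nat.leb 3 m); [|constructor].
    apply NoDup_map_inj; [apply shift3_inj | apply NoDup_compositions3].
  - intros [t e] H1 H2. apply in_prod_iff in H1 as [H1 _]. apply in_seq in H1.
    apply in_map_iff in H2 as [x [E _]]. injection E; intros; subst. lia.
Qed.

Lemma length_internal_labels n m : (4 <= n) -> (2 <= m) ->
  (2 * length (internal_labels n m) = (n - 3) * (m * (m - 1)) + (m - 1) * (m - 2)).
Proof.
  intros Hn Hm. unfold internal_labels.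
  rewrite length_app, length_prod, length_seq, !length_map.
  pose proof (length_compositions3 (m - 2)) as H1.
  destruct (Nat.leb_spec 3 m).
  - rewrite length_map. pose proof (length_compositions3 (m - 3)) as H2.
    replace (m - 2 + 1) with (m - 1) in H1 by lia. replace (m - 2 + 2) with m in H1 by lia.
    replace (m - 3 + 1) with (m - 2) in H2 by lia. replace (m - 3 + 2) with (m - 1) in H2 by lia.
    nia.
  - assert (m = 2) by lia. subst. simpl in *. lia.
Qed.

End Counting.

(** * Cells of the fan and vertices of the quiver *)

Section Fan.

Variables (n : nat) (p : nat -> pt) (a m : nat).
Hypothesis Ha : (a < n)%nat.
Hypothesis Hn : (4 <= n)%nat.
Hypothesis Hm : (2 <= m)%nat.
Variable sg : R.
Hypothesis Hsg : sg = 1 \/ sg = -1.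
Hypothesis Hconv : forall s u v, (s < u)%nat -> (u < v)%nat -> (v < n)%nat ->
  sg * orient (vtx n p a s) (vtx n p a u) (vtx n p a v) > 0.

Let Hm1 : (1 <= m)%nat.
Proof. lia. Qed.

Local Notation vt := (vtx n p a).
Local Notation in_fan_tri t q := (in_tri (vt 0) (vt t) (vt (S t)) m q).
Local Notation in_fan_cell t q i j k := (in_tri_cell (vt 0) (vt t) (vt (S t)) m q i j k).

Definition fan_pt (t : nat) (x y z : R) : pt := bary_pt (vt 0) (vt t) (vt (S t)) m x y z.

Lemma fan_orient_nz t : (1 <= t)%nat -> (t <= n - 2)%nat -> orient (vt 0) (vt t) (vt (S t)) <> 0.
Proof. intros H1 H2 E. specialize (Hconv 0 t (S t) ltac:(lia) ltac:(lia) ltac:(lia)). nra. Qed.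

Lemma fan_tri_in_polygon t q : (1 <= t)%nat -> (t <= n - 2)%nat ->
  in_fan_tri t q -> in_polygon n p q.
Proof.
  intros H1 H2 Hq. pose proof (fan_orient_nz t H1 H2). unfold vtx in *.
  apply (in_tri_in_polygon n p ((a + 0) mod n) ((a + t) mod n) ((a + S t) mod n) m q);
    auto; apply Nat.mod_upper_bound; lia.
Qed.

(* q lies between the diagonals to vt t and vt (S t) where the sign of
   orient (vt 0) (vt t) q changes, as t runs from 1 to n - 1. *)
Lemma polygon_in_fan_tri q : in_polygon n p q ->
  exists t, (1 <= t)%nat /\ (t <= n - 2)%nat /\ in_fan_tri t q.
Proof.
  intros Hq.
  assert (Hall : forall X Y sg', (forall u, (u < n)%nat -> 0 <= sg' * orient X Y (vt u)) ->
                  0 <= sg' * orient X Y q).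
  { intros X Y sg' Hu. apply (in_polygon_half_plane n p); auto; try lia.
    intros i Hi. destruct (vtx_surj n p a Ha i Hi) as [u [Hu' ->]]. auto. }
  set (f := fun s => sg * orient (vt 0) (vt s) q).
  assert (F1 : 0 <= f 1%nat).
  { apply Hall. intros u Hu. destruct (Nat.lt_ge_cases u 2) as [H|H].
    - destruct u as [|[|u]]; try lia; [rewrite orient_same13 | rewrite orient_same23]; lra.
    - specialize (Hconv 0 1 u ltac:(lia) ltac:(lia) Hu). lra. }
  assert (F2 : f (n - 1)%nat <= 0).
  { assert (0 <= (- sg) * orient (vt 0) (vt (n - 1)) q); [|unfold f; lra].
    apply Hall. intros u Hu.
    destruct (Nat.eq_dec u 0) as [->|H0]; [rewrite orient_same13; lra|].
    destruct (Nat.eq_dec u (n - 1)) as [->|H1]; [rewrite orient_same23; lra|].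
    specialize (Hconv 0 u (n - 1) ltac:(lia) ltac:(lia) ltac:(lia)).
    rewrite orient_swap. lra. }
  destruct (discrete_sign_change f (n - 1) ltac:(lia) F1 F2) as [t [Ht1 [Ht2 [Ft Ft']]]].
  exists t. split; auto. split; [lia|].
  pose proof (Hconv 0 t (S t) ltac:(lia) ltac:(lia) ltac:(lia)) as HD.
  pose proof (pos_INR m).
  unfold in_tri, bcA, bcB, bcC. repeat split; apply (sign_div_nonneg sg); auto.
  - rewrite <- orient_rot. apply Hall. intros u Hu.
    destruct (Nat.lt_ge_cases u t) as [Hut|Hut].
    + specialize (Hconv u t (S t) Hut ltac:(lia) ltac:(lia)).
      rewrite orient_rot. lra.
    + destruct (Nat.eq_dec u t) as [->|H0]; [rewrite orient_same13; lra|].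
      destruct (Nat.eq_dec u (S t)) as [->|H1]; [rewrite orient_same23; lra|].
      specialize (Hconv t (S t) u ltac:(lia) ltac:(lia) Hu). lra.
  - rewrite (orient_swap (vt 0) (vt (S t)) q). unfold f in Ft'. lra.
Qed.

(* Comparing the signed distances of both sides to the diagonal (vt 0, vt (S t)):
   the two triangles lie on opposite sides of it. *)
Lemma fan_pt_glue_zero t t' x y z x' y' z' :
  (1 <= t)%nat -> (t < t')%nat -> (t' <= n - 2)%nat ->
  0 <= y -> 0 <= y' -> 0 <= z' -> x + y + z = INR m -> x' + y' + z' = INR m ->
  fan_pt t x y z = fan_pt t' x' y' z' -> y = 0 /\ z' = 0 /\ (t' = S t \/ y' = 0).
Proof.
  intros H1 H2 H3 Py Py' Pz' Hs Hs' E.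
  pose proof (not_0_INR m ltac:(lia)) as Hm0.
  assert (E2 : orient (vt 0) (vt (S t)) (fan_pt t x y z) = orient (vt 0) (vt (S t)) (fan_pt t' x' y' z'))
    by (rewrite E; reflexivity).
  unfold fan_pt in E2. rewrite !orient_bary_pt, ?orient_same23, ?orient_same13 in E2 by auto.
  rewrite (orient_swap (vt 0) (vt t) (vt (S t))) in E2.
  pose proof (Hconv 0 t (S t) ltac:(lia) ltac:(lia) ltac:(lia)) as o1.
  pose proof (Hconv 0 (S t) (S t') ltac:(lia) ltac:(lia) ltac:(lia)) as o3.
  set (c1 := orient (vt 0) (vt t) (vt (S t))) in *.
  set (c2 := orient (vt 0) (vt (S t)) (vt t')) in *.
  set (c3 := orient (vt 0) (vt (S t)) (vt (S t'))) in *.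
  assert (o2 : t' = S t \/ sg * c2 > 0).
  { destruct (Nat.eq_dec t' (S t)) as [->|Hne]; auto.
    right. apply (Hconv 0 (S t) t'); lia. }
  assert (o2' : sg * c2 >= 0) by (destruct o2 as [->|]; [unfold c2; rewrite orient_same23|]; lra).
  assert (E3 : y * (sg * c1) + y' * (sg * c2) + z' * (sg * c3) = 0).
  { apply (Rmult_eq_compat_l (sg * INR m)) in E2.
    replace (sg * INR m * ((x * 0 + y * - c1 + z * 0) / INR m)) with (- (y * (sg * c1))) in E2
      by (field; auto).
    replace (sg * INR m * ((x' * 0 + y' * c2 + z' * c3) / INR m))
      with (y' * (sg * c2) + z' * (sg * c3)) in E2 by (field; auto).
    lra. }
  split; [nra | split; [nra|]]. destruct o2; [auto | right; nra].
Qed.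

Lemma fan_pt_glue t t' x y z x' y' z' :
  (1 <= t)%nat -> (t < t')%nat -> (t' <= n - 2)%nat ->
  0 <= x -> 0 <= y -> 0 <= z -> 0 <= x' -> 0 <= y' -> 0 <= z' ->
  x + y + z = INR m -> x' + y' + z' = INR m ->
  fan_pt t x y z = fan_pt t' x' y' z' ->
  (t' = S t /\ y = 0 /\ z' = 0 /\ x = x' /\ z = y') \/
  (x = INR m /\ y = 0 /\ z = 0 /\ x' = INR m /\ y' = 0 /\ z' = 0).
Proof.
  intros H1 H2 H3 Px Py Pz Px' Py' Pz' Hs Hs' E.
  pose proof (not_0_INR m ltac:(lia)) as Hm0.
  destruct (fan_pt_glue_zero t t' x y z x' y' z') as [-> [-> [-> | ->]]]; auto; unfold fan_pt in E.
  - left.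
    replace (bary_pt (vt 0) (vt t) (vt (S t)) m x 0 z) with (bary_pt (vt 0) (vt (S t)) (vt (S (S t))) m x z 0)
      in E by (unfold bary_pt, bary; f_equal; field; auto).
    destruct (bary_pt_inj _ _ _ m Hm1 (fan_orient_nz (S t) ltac:(lia) ltac:(lia)) x z 0 x' y' 0
      ltac:(lra) ltac:(lra) E) as [Ex [Ez _]].
    repeat split; auto.
  - right. assert (Hx' : x' = INR m) by lra. subst x'.
    replace (bary_pt (vt 0) (vt t') (vt (S t')) m (INR m) 0 0) with (bary_pt (vt 0) (vt t) (vt (S t)) m (INR m) 0 0)
      in E by (unfold bary_pt, bary; f_equal; field; auto).
    destruct (bary_pt_inj _ _ _ m Hm1 (fan_orient_nz t ltac:(lia) ltac:(lia)) x 0 z (INR m) 0 0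
      ltac:(lra) ltac:(lra) E) as [? [? ?]].
    repeat split; auto.
Qed.

Lemma fan_pt_same_tri t t' x y z x' y' z' :
  (1 <= t)%nat -> (t <= n - 2)%nat -> (1 <= t')%nat -> (t' <= n - 2)%nat ->
  0 <= x -> 0 <= y -> 0 <= z -> 0 <= x' -> 0 <= y' -> 0 <= z' ->
  x + y + z = INR m -> x' + y' + z' = INR m ->
  (0 < y \/ (t' <= t)%nat) -> (0 < z \/ (t <= t')%nat) ->
  fan_pt t x y z = fan_pt t' x' y' z' -> t = t' /\ x = x' /\ y = y' /\ z = z'.
Proof.
  intros H1 H2 H1' H2' Px Py Pz Px' Py' Pz' Hs Hs' Hy Hz E.
  destruct (Nat.lt_total t t') as [Hlt|[Heq|Hgt]].
  - destruct (fan_pt_glue_zero t t' x y z x' y' z') as [? [? _]]; auto; destruct Hy; lra || lia.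
  - subst t'. split; auto. apply (bary_pt_inj (vt 0) (vt t) (vt (S t)) m); auto.
    apply fan_orient_nz; auto.
  - destruct (fan_pt_glue_zero t' t x' y' z' x y z) as [? [? _]]; auto; destruct Hz; lra || lia.
Qed.

Lemma fan_pt_side t x z : fan_pt t x 0 z = fan_pt (S t) x z 0.
Proof.
  pose proof (not_0_INR m ltac:(lia)). unfold fan_pt, bary_pt, bary. f_equal; field; auto.
Qed.

Lemma fan_pt_apex t t' : fan_pt t (INR m) 0 0 = fan_pt t' (INR m) 0 0.
Proof.
  pose proof (not_0_INR m ltac:(lia)). unfold fan_pt, bary_pt, bary. f_equal; field; auto.
Qed.

(* The
   lattice points on a diagonal, and the apex, belong to several triangles. *)
Definition cell (v q : pt) : Prop :=
  forall t, (1 <= t)%nat -> (t <= n - 2)%nat -> in_fan_tri t q ->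
    exists i j k, in_fan_cell t q i j k /\ v = fan_pt t (INR i) (INR j) (INR k).

Lemma in_fan_cell_transfer t t' q i j k :
  (1 <= t)%nat -> (t <= n - 2)%nat -> (1 <= t')%nat -> (t' <= n - 2)%nat ->
  in_fan_tri t q -> in_fan_tri t' q -> in_fan_cell t q i j k ->
  exists i' j' k', in_fan_cell t' q i' j' k' /\ fan_pt t (INR i) (INR j) (INR k) = fan_pt t' (INR i') (INR j') (INR k').
Proof.
  intros H1 H2 H1' H2' Hin Hin' HSN.
  pose proof (fan_orient_nz t H1 H2) as D1. pose proof (fan_orient_nz t' H1' H2') as D2.
  unfold in_tri_cell, in_tri in *.
  pose proof (bc_sum _ _ _ m D1 q) as S1. pose proof (bc_sum _ _ _ m D2 q) as S2.
  pose proof (bary_pt_bc _ _ _ m Hm1 D1 q) as P1. pose proof (bary_pt_bc _ _ _ m Hm1 D2 q) as P2.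
  set (X := bcA (vt 0) (vt t) (vt (S t)) m q) in *. set (Y := bcB (vt 0) (vt t) (vt (S t)) m q) in *.
  set (Z := bcC (vt 0) (vt t) (vt (S t)) m q) in *. set (X' := bcA (vt 0) (vt t') (vt (S t')) m q) in *.
  set (Y' := bcB (vt 0) (vt t') (vt (S t')) m q) in *. set (Z' := bcC (vt 0) (vt t') (vt (S t')) m q) in *.
  destruct Hin as [PX [PY PZ]]. destruct Hin' as [PX' [PY' PZ']].
  assert (E : fan_pt t X Y Z = fan_pt t' X' Y' Z') by (unfold fan_pt; congruence).
  destruct (in_cell_coord_zero m X Y Z i j k HSN S1) as [_ [Zj Zk]].
  assert (Apex : Y = 0 -> Z = 0 -> X' = INR m -> Y' = 0 -> Z' = 0 ->
    exists i' j' k', in_cell m X' Y' Z' i' j' k' /\ fan_pt t (INR i) (INR j) (INR k) = fan_pt t' (INR i') (INR j') (INR k')).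
  { intros HY HZ HX' HY' HZ'. rewrite (Zj HY), (Zk HZ) in *.
    assert (i = m) by (destruct HSN; lia). subst i.
    exists m, 0%nat, 0%nat. split; [|apply fan_pt_apex; auto].
    split; [lia|]. simpl INR. rewrite HX', HY', HZ'. lra. }
  destruct (Nat.lt_total t t') as [Hlt|[Heq|Hgt]].
  - destruct (fan_pt_glue t t' X Y Z X' Y' Z' H1 Hlt H2'
      PX PY PZ PX' PY' PZ' S1 S2 E) as [[-> [HY [HZ' [HX HZ]]]] | [HX [HY [HZ [HX' [HY' HZ']]]]]];
      [|apply Apex; auto].
    rewrite (Zj HY) in *. exists i, k, 0%nat. split; [|apply fan_pt_side; auto].
    destruct HSN as [Hs HSN]. split; [lia|]. simpl INR in *. rewrite <- HX, <- HZ, HZ'. lra.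
  - subst t'. exists i, j, k. auto.
  - destruct (fan_pt_glue t' t X' Y' Z' X Y Z H1' Hgt H2
      PX' PY' PZ' PX PY PZ S2 S1 (eq_sym E)) as [[-> [HY' [HZ [HX HZ']]]] | [HX' [HY' [HZ' [HX [HY HZ]]]]]];
      [|apply Apex; auto].
    rewrite (Zk HZ) in *. exists i, 0%nat, j. split; [|symmetry; apply fan_pt_side; auto].
    destruct HSN as [Hs HSN]. split; [lia|]. simpl INR in *. rewrite HX, HZ', HY'. lra.
Qed.

Lemma dimer_edge_fan w b : dimer_edge n p a m w b <->
  exists t, (1 <= t)%nat /\ (t <= n - 2)%nat /\ tri_edge (vt 0) (vt t) (vt (S t)) m w b.
Proof.
  unfold dimer_edge. split.
  - intros [t [[H1 H2] H]]. rewrite fan_tri_vtx in H by auto. exists t; auto.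
  - intros [t [H1 [H2 H]]]. exists t. split; [lia|]. rewrite fan_tri_vtx by auto. exact H.
Qed.

Lemma cell_intro t q i j k : (1 <= t)%nat -> (t <= n - 2)%nat ->
  in_fan_tri t q -> in_fan_cell t q i j k -> cell (fan_pt t (INR i) (INR j) (INR k)) q.
Proof. intros H1 H2 Hin HSN t' H1' H2' Hin'. apply (in_fan_cell_transfer t t' q i j k); auto. Qed.

Lemma cell_not_on_graph v q : cell v q -> ~ on_graph n p a m q.
Proof.
  intros HC [w [b [s [Hd [Hs Hq]]]]].
  apply dimer_edge_fan in Hd. destruct Hd as [t [H1 [H2 Ht]]].
  destruct (tri_graph_point _ _ _ m (fan_orient_nz t H1 H2) Hm q) as [Hin Hno];
    [exists w, b, s; auto|].
  destruct (HC t H1 H2 Hin) as [i [j [k [HSN _]]]]. apply (Hno i j k HSN).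
Qed.

Lemma cell_unique v v' q : in_polygon n p q -> cell v q -> cell v' q -> v = v'.
Proof.
  intros Hq HC HC'.
  destruct (polygon_in_fan_tri q Hq) as [t [H1 [H2 Hin]]].
  destruct (HC t H1 H2 Hin) as [i [j [k [HSN ->]]]].
  destruct (HC' t H1 H2 Hin) as [i' [j' [k' [HSN' ->]]]].
  pose proof (bc_sum _ _ _ m (fan_orient_nz t H1 H2) q) as Hs.
  injection (in_cell_unique _ _ _ _ _ _ _ _ _ _ HSN HSN') as -> -> ->. reflexivity.
Qed.

Lemma region_cell q : region n p a m q ->
  exists t i j k, (1 <= t)%nat /\ (t <= n - 2)%nat /\ in_fan_tri t q /\ in_fan_cell t q i j k.
Proof.
  intros [Hq Hng].
  destruct (polygon_in_fan_tri q Hq) as [t [H1 [H2 Hin]]].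
  destruct (in_tri_cell_or_graph _ _ _ m (fan_orient_nz t H1 H2) Hm q Hin)
    as [[i [j [k HSN]]] | [w [b [s [He [Hs Hqs]]]]]].
  - exists t, i, j, k. auto.
  - exfalso. apply Hng. exists w, b, s. split; [apply dimer_edge_fan; exists t; auto | auto].
Qed.

Lemma eventually_near_forall_nat (P : nat -> pt -> Prop) q N :
  (forall t, (1 <= t)%nat -> (t <= N)%nat -> eventually_near q (P t)) ->
  eventually_near q (fun x => forall t, (1 <= t)%nat -> (t <= N)%nat -> P t x).
Proof.
  induction N as [|N IH]; intros H.
  - exists 1. split; [lra|]. intros; lia.
  - apply (eventually_near_impl q (fun x => (forall t, (1 <= t)%nat -> (t <= N)%nat -> P t x) /\ P (S N) x)).
    + intros x [Hx HSN] t H1 H2. destruct (Nat.eq_dec t (S N)) as [->|Hne]; auto.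
      apply Hx; lia.
    + apply eventually_near_and; [apply IH; intros; apply H|apply H]; lia.
Qed.

Lemma cell_near v q : cell v q -> eventually_near q (cell v).
Proof.
  intros HC. apply eventually_near_forall_nat. intros t H1 H2.
  pose proof (fan_orient_nz t H1 H2) as D.
  destruct (classic (in_fan_tri t q)) as [Hin|Hout].
  - destruct (HC t H1 H2 Hin) as [i [j [k [HSN Hv]]]].
    apply (eventually_near_impl _ _ _ (fun x Hx _ => ex_intro _ i (ex_intro _ j (ex_intro _ k (conj Hx Hv))))).
    apply in_tri_cell_near; auto.
  - apply (eventually_near_impl _ _ _ (fun x Hx Hin => False_ind _ (Hx Hin))).
    apply not_in_tri_near; auto.
Qed.

Lemma conn_seg x y : (forall s, 0 <= s <= 1 -> region n p a m (seg x y s)) -> conn n p a m x y.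
Proof.
  intros H. exists (seg x y). split; [|split; [|split]]; auto.
  - intros t _. unfold seg; simpl. split; reg.
  - unfold seg. destruct x; simpl. f_equal; ring.
  - unfold seg. destruct x, y; simpl. f_equal; ring.
Qed.

Lemma conn_path2 x y z :
  (forall s, 0 <= s <= 1 -> region n p a m (seg x y s)) ->
  (forall s, 0 <= s <= 1 -> region n p a m (seg y z s)) -> conn n p a m x z.
Proof.
  intros H1 H2. exists (path2 x y z). split; [|split; [|split]].
  - intros t _. unfold path2; simpl. split; reg.
  - rewrite path2_first_leg by lra. unfold seg. destruct x; simpl. f_equal; ring.
  - rewrite path2_second_leg by lra. unfold seg. destruct y, z; simpl. f_equal; ring.
  - intros t Ht. destruct (Rle_dec t (1/2)).
    + rewrite path2_first_leg by lra. apply H1. lra.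
    + rewrite path2_second_leg by lra. apply H2. lra.
Qed.

(* Cells are open, pairwise disjoint and cover the complement of the graph, so
   "being in the cell of v" is locally constant along a path in the complement;
   a sign flip would contradict the intermediate value theorem. *)
Lemma cell_conn v q1 q2 : conn n p a m q1 q2 -> cell v q1 -> cell v q2.
Proof.
  intros [g [Hcont [H0 [H1 Hreg]]]] HC1.
  destruct (classic (cell v q2)) as [HC2|HC2]; auto. exfalso.
  set (h := fun s => if excluded_middle_informative (cell v (g (clamp01 s))) then -1 else 1).
  assert (LC : forall s0, 0 <= s0 <= 1 -> exists d, 0 < d /\ forall s, Rabs (s - s0) < d ->
             (cell v (g (clamp01 s)) <-> cell v (g s0))).
  { intros s0 Hs0. destruct (Hcont s0 Hs0) as [Cx Cy].
    assert (Hnear : forall d, 0 < d -> exists e, 0 < e /\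
              forall s, Rabs (s - s0) < e -> near d (g s0) (g (clamp01 s))).
    { intros d Hd. destruct (continuity_pt_eps _ _ Cx d Hd) as [e1 [He1 P1]].
      destruct (continuity_pt_eps _ _ Cy d Hd) as [e2 [He2 P2]].
      exists (Rmin e1 e2). split; [apply Rmin_pos; auto|]. intros s Hs.
      pose proof (clamp01_dist s s0 Hs0). pose proof (Rmin_l e1 e2). pose proof (Rmin_r e1 e2).
      split; [apply P1 | apply P2]; lra. }
    destruct (region_cell (g s0) (Hreg s0 Hs0)) as [t [i [j [k [Ht1 [Ht2 [Hin HSN]]]]]]].
    set (v' := fan_pt t (INR i) (INR j) (INR k)).
    assert (HC' : cell v' (g s0)) by (apply cell_intro; auto).
    destruct (cell_near v' (g s0) HC') as [d [Hd P]].
    destruct (Hnear d Hd) as [e [He Pe]]. exists e. split; auto. intros s Hs.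
    assert (Hv : forall x, region n p a m x -> cell v' x -> cell v x <-> v = v').
    { intros x [Hx _] Hx'. split; [intros; apply (cell_unique v v' x); auto | intros ->; auto]. }
    rewrite (Hv _ (Hreg _ (clamp01_range s)) (P _ (Pe s Hs))), (Hv _ (Hreg _ Hs0) HC'). tauto. }
  assert (Hcont_h : forall s0, 0 <= s0 <= 1 -> continuity_pt h s0).
  { intros s0 Hs0. apply continuity_pt_locally_constant. destruct (LC s0 Hs0) as [d [Hd P]].
    exists d. split; auto. intros s Hs. unfold h. rewrite (clamp01_id s0) by auto.
    destruct (excluded_middle_informative (cell v (g (clamp01 s)))) as [c1|c1];
    destruct (excluded_middle_informative (cell v (g s0))) as [c2|c2]; auto;
      exfalso; [apply c2, (P s Hs) | apply c1, (P s Hs)]; auto. }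
  assert (F0 : h 0 < 0).
  { unfold h. rewrite clamp01_id, H0 by lra. destruct excluded_middle_informative; [lra | contradiction]. }
  assert (F1 : 0 < h 1).
  { unfold h. rewrite clamp01_id, H1 by lra. destruct excluded_middle_informative; [contradiction | lra]. }
  destruct (IVT_interv h 0 1 Hcont_h ltac:(lra) F0 F1) as [z [_ Hz]].
  unfold h in Hz. destruct excluded_middle_informative; lra.
Qed.

(* The edges of the graph meeting the boundary of the polygon: those at the side
   nodes on the outer sides BC of the triangles, on AB of the first triangle and
   on AC of the last one. *)
Definition outer_edge (t : nat) (w b : pt) : Prop :=
  (exists j k, (j + k = m - 1)%nat /\ w = white_node (vt 0) (vt t) (vt (S t)) m 0 j k /\
     b = sideBC_node (vt 0) (vt t) (vt (S t)) m j k) \/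
  (t = 1%nat /\ exists i j, (i + j = m - 1)%nat /\ w = white_node (vt 0) (vt t) (vt (S t)) m i j 0 /\
     b = sideAB_node (vt 0) (vt t) (vt (S t)) m i j) \/
  (t = (n - 2)%nat /\ exists i k, (i + k = m - 1)%nat /\ w = white_node (vt 0) (vt t) (vt (S t)) m i 0 k /\
     b = sideAC_node (vt 0) (vt t) (vt (S t)) m i k).

Lemma fan_tri_edge t w b : (1 <= t)%nat -> (t <= n - 2)%nat ->
  tri_edge (vt 0) (vt t) (vt (S t)) m w b -> dimer_edge n p a m w b.
Proof. intros H1 H2 He. apply dimer_edge_fan. exists t. auto. Qed.

(* A side node on a diagonal has a white neighbour in each of the two triangles. *)
Lemma diagonal_white_nodes_neq t i k : (1 <= t)%nat -> (S t <= n - 2)%nat -> (i + k = m - 1)%nat ->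
  white_node (vt 0) (vt t) (vt (S t)) m i 0 k <> white_node (vt 0) (vt (S t)) (vt (S (S t))) m i k 0.
Proof.
  intros H1 H2 Hs E. rewrite !white_node_bary in E by auto.
  pose proof (INR_sum3_pred i 0 k m Hm1 ltac:(lia)). simpl INR in *.
  pose proof (pos_INR i); pose proof (pos_INR k).
  destruct (fan_pt_glue_zero t (S t) (INR i + /3) (0 + /3) (INR k + /3) (INR i + /3) (INR k + /3) (0 + /3))
    as [? _]; try lra; try lia. exact E.
Qed.

Lemma boundary_arrow_outer w b : boundary_arrow n p a m w b ->
  exists t, (1 <= t)%nat /\ (t <= n - 2)%nat /\ outer_edge t w b.
Proof.
  intros [Hd Hu]. pose proof Hd as Hd'. apply dimer_edge_fan in Hd'.
  destruct Hd' as [t [H1 [H2 [i [j [k [Hs [Hw Hcase]]]]]]]].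
  exists t. split; auto. split; auto. unfold outer_edge.
  destruct Hcase as [[i' [j' [k' [Hs' [Hc Hb]]]]] | [[-> Hb] | [[-> Hb] | [-> Hb]]]].
  - (* a downward black node has two white neighbours in its own triangle *)
    exfalso. subst b.
    assert (E1 : white_node (vt 0) (vt t) (vt (S t)) m (S i') j' k' = w).
    { apply Hu, (fan_tri_edge t); auto. apply white_down_edge; auto; lia. }
    assert (E2 : white_node (vt 0) (vt t) (vt (S t)) m i' (S j') k' = w).
    { apply Hu, (fan_tri_edge t); auto. apply white_down_edge; auto; lia. }
    rewrite <- E2, !white_node_bary in E1 by auto.
    pose proof (INR_sum3_pred2 i' j' k' m Hm Hs').
    apply bary_pt_inj in E1; [|auto | apply fan_orient_nz; auto | rewrite S_INR; lra | rewrite S_INR; lra].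
    destruct E1 as [E _]. rewrite S_INR in E. lra.
  - destruct (Nat.eq_dec t 1) as [->|Ht1].
    { right; left. split; auto. exists i, j. split; [lia | auto]. }
    exfalso. destruct t as [|t0]; [lia|].
    apply (diagonal_white_nodes_neq t0 i j); try lia. rewrite <- Hw. apply Hu, (fan_tri_edge t0); try lia.
    exists i, 0%nat, j. split; [lia|]. split; [reflexivity|]. right; right; left. split; auto.
    rewrite Hb. apply sideAB_node_eq_sideAC.
  - destruct (Nat.eq_dec t (n - 2)) as [->|Ht1].
    { right; right. split; auto. exists i, k. split; [lia | auto]. }
    exfalso. apply (diagonal_white_nodes_neq t i k); try lia. rewrite <- Hw. symmetry.
    apply Hu, (fan_tri_edge (S t)); try lia.
    exists i, k, 0%nat. split; [lia|]. split; [reflexivity|]. right; left. split; auto.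
    rewrite Hb. symmetry. apply sideAB_node_eq_sideAC.
  - left. exists j, k. split; [lia|]. auto.
Qed.

Lemma dimer_edge_coords w' b : dimer_edge n p a m w' b ->
  exists t' i j k, (1 <= t')%nat /\ (t' <= n - 2)%nat /\ (i + j + k = m - 1)%nat /\
    w' = white_node (vt 0) (vt t') (vt (S t')) m i j k /\
    ((exists i' j' k', (i' + j' + k' = m - 2)%nat /\
        b = fan_pt t' (INR i' + 2/3) (INR j' + 2/3) (INR k' + 2/3)) \/
     (k = 0%nat /\ b = fan_pt t' (INR i + /2) (INR j + /2) 0) \/
     (j = 0%nat /\ b = fan_pt t' (INR i + /2) 0 (INR k + /2)) \/
     (i = 0%nat /\ b = fan_pt t' 0 (INR j + /2) (INR k + /2))).
Proof.
  intros Hd. apply dimer_edge_fan in Hd as [t' [H1 [H2 [i [j [k [Hs [Hw Hc]]]]]]]].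
  exists t', i, j, k. do 4 (split; auto). unfold fan_pt.
  destruct Hc as [[i' [j' [k' [Hs' [_ ->]]]]] | [[-> ->] | [[-> ->] | [-> ->]]]].
  - left. exists i', j', k'. rewrite down_node_bary; auto.
  - right; left. rewrite sideAB_node_bary; auto.
  - right; right; left. rewrite sideAC_node_bary; auto.
  - right; right; right. rewrite sideBC_node_bary; auto.
Qed.

(* A second white neighbour w' of b would lie in the same triangle
   (fan_pt_same_tri), where the coordinates of b determine it. *)
Lemma outer_edge_boundary_arrow t w b : (1 <= t)%nat -> (t <= n - 2)%nat ->
  outer_edge t w b -> boundary_arrow n p a m w b.
Proof.
  intros H1 H2 Hout.
  assert (Hd : dimer_edge n p a m w b).
  { apply (fan_tri_edge t); auto.
    destruct Hout as [[j [k [Hs [-> ->]]]] | [[_ [i [j [Hs [-> ->]]]]] | [_ [i [k [Hs [-> ->]]]]]]].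
    - exists 0%nat, j, k. split; [lia|]. split; [reflexivity|]. right; right; right. auto.
    - exists i, j, 0%nat. split; [lia|]. split; [reflexivity|]. right; left. auto.
    - exists i, 0%nat, k. split; [lia|]. split; [reflexivity|]. right; right; left. auto. }
  split; auto. intros w' Hd'.
  destruct (dimer_edge_coords w' b Hd') as [t' [i' [j' [k' [H1' [H2' [Hs' [-> Hc]]]]]]]].
  pose proof (INR_sum3_pred i' j' k' m Hm1 Hs').
  pose proof (pos_INR i'); pose proof (pos_INR j'); pose proof (pos_INR k').
  destruct Hout as [[j [k [Hs [-> Hb]]]] | [[Ht [i [j [Hs [-> Hb]]]]] | [Ht [i [k [Hs [-> Hb]]]]]]];
  [ pose proof (INR_sum3_pred 0 j k m Hm1 ltac:(lia)); pose proof (pos_INR j); pose proof (pos_INR k)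
  | pose proof (INR_sum3_pred i j 0 m Hm1 ltac:(lia)); pose proof (pos_INR i); pose proof (pos_INR j)
  | pose proof (INR_sum3_pred i 0 k m Hm1 ltac:(lia)); pose proof (pos_INR i); pose proof (pos_INR k) ];
  simpl INR in *;
  rewrite ?sideBC_node_bary, ?sideAB_node_bary, ?sideAC_node_bary in Hb by auto;
  destruct Hc as [[i'' [j'' [k'' [Hs'' Hb']]]] | [[-> Hb'] | [[-> Hb'] | [-> Hb']]]]; simpl INR in *;
  rewrite Hb' in Hb; symmetry in Hb;
  try (pose proof (INR_sum3_pred2 i'' j'' k'' m Hm Hs''); pose proof (pos_INR i'');
       pose proof (pos_INR j''); pose proof (pos_INR k''));
  lazymatch type of Hb with
  | bary_pt _ _ _ _ ?x ?y ?z = fan_pt _ ?x' ?y' ?z' =>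
    destruct (fan_pt_same_tri t t' x y z x' y' z' H1 H2 H1' H2') as [<- [Ex [Ey Ez]]];
    [lra .. | lia || lra | lia || lra | exact Hb |]
  end;
  try lra; f_equal; apply INR_eq; lra.
Qed.

Definition label_pt (e : nat * (nat * nat * nat)) : pt :=
  let '(t, (i, j, k)) := e in fan_pt t (INR i) (INR j) (INR k).

Lemma lattice_pt_in_cell t i j k : (1 <= t)%nat -> (t <= n - 2)%nat -> (i + j + k = m)%nat ->
  in_fan_tri t (fan_pt t (INR i) (INR j) (INR k)) /\
  in_fan_cell t (fan_pt t (INR i) (INR j) (INR k)) i j k.
Proof.
  intros H1 H2 Hs. pose proof (fan_orient_nz t H1 H2) as D. pose proof (INR_sum3 i j k m Hs).
  pose proof (pos_INR i); pose proof (pos_INR j); pose proof (pos_INR k).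
  unfold in_tri, in_tri_cell, in_cell, fan_pt. rewrite bcA_bary_pt, bcB_bary_pt, bcC_bary_pt by auto.
  split; [lra | split; [auto | lra]].
Qed.

Lemma INR_eq_0 i : INR i = 0 -> i = 0%nat.
Proof. intros. apply INR_eq. auto. Qed.

Lemma label_pt_glue t i j k t' i' j' k' :
  (1 <= t)%nat -> (t <= n - 2)%nat -> (1 <= t')%nat -> (t' <= n - 2)%nat ->
  (i + j + k = m)%nat -> (i' + j' + k' = m)%nat ->
  fan_pt t (INR i) (INR j) (INR k) = fan_pt t' (INR i') (INR j') (INR k') ->
  (t = t' /\ i = i' /\ j = j' /\ k = k' \/
   t' = S t /\ j = 0 /\ k' = 0 /\ i = i' /\ k = j' \/
   t = S t' /\ j' = 0 /\ k = 0 /\ i' = i /\ k' = j \/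
   k = 0 /\ k' = 0)%nat.
Proof.
  intros H1 H2 H1' H2' Hs Hs' E.
  pose proof (INR_sum3 i j k m Hs). pose proof (INR_sum3 i' j' k' m Hs').
  pose proof (pos_INR i); pose proof (pos_INR j); pose proof (pos_INR k).
  pose proof (pos_INR i'); pose proof (pos_INR j'); pose proof (pos_INR k').
  destruct (Nat.lt_total t t') as [Hlt|[<-|Hgt]].
  - destruct (fan_pt_glue t t' (INR i) (INR j) (INR k) (INR i') (INR j') (INR k'))
      as [[? [Ej [Ek' [Ei Ek]]]] | [_ [_ [Ek [_ [_ Ek']]]]]]; auto.
    + apply INR_eq_0 in Ej, Ek'. apply INR_eq in Ei, Ek. lia.
    + apply INR_eq_0 in Ek, Ek'. lia.
  - left. destruct (bary_pt_inj _ _ _ m Hm1 (fan_orient_nz t H1 H2) _ _ _ _ _ _ H H0 E) as [Ei [Ej Ek]].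
    apply INR_eq in Ei, Ej, Ek. auto.
  - destruct (fan_pt_glue t' t (INR i') (INR j') (INR k') (INR i) (INR j) (INR k))
      as [[? [Ej' [Ek [Ei Ek']]]] | [_ [_ [Ek' [_ [_ Ek]]]]]]; auto.
    + apply INR_eq_0 in Ej', Ek. apply INR_eq in Ei, Ek'. lia.
    + apply INR_eq_0 in Ek, Ek'. lia.
Qed.

Lemma label_pt_cell e : internal_label n m e -> cell (label_pt e) (label_pt e).
Proof.
  destruct e as [t [[i j] k]]. intros [H1 [H2 [Hs _]]].
  destruct (lattice_pt_in_cell t i j k H1 H2 Hs). apply cell_intro; auto.
Qed.

Lemma label_pt_inj e1 e2 : internal_label n m e1 -> internal_label n m e2 ->
  label_pt e1 = label_pt e2 -> e1 = e2.
Proof.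
  destruct e1 as [t [[i j] k]], e2 as [t' [[i' j'] k']].
  intros [H1 [H2 [Hs [Hi [Hk Hj]]]]] [H1' [H2' [Hs' [Hi' [Hk' Hj']]]]] E.
  destruct (label_pt_glue t i j k t' i' j' k') as [[-> [-> [-> ->]]] | [? | [? | ?]]]; auto; lia.
Qed.

Lemma in_fan_cell_region t x i j k : (1 <= t)%nat -> (t <= n - 2)%nat ->
  in_fan_tri t x -> in_fan_cell t x i j k -> region n p a m x.
Proof.
  intros H1 H2 Ix Sx. split.
  - apply (fan_tri_in_polygon t); auto.
  - apply (cell_not_on_graph (fan_pt t (INR i) (INR j) (INR k))). apply cell_intro; auto.
Qed.

Lemma in_fan_cell_seg_region t x y i j k : (1 <= t)%nat -> (t <= n - 2)%nat ->
  in_fan_tri t x -> in_fan_tri t y -> in_fan_cell t x i j k -> in_fan_cell t y i j k ->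
  forall s, 0 <= s <= 1 -> region n p a m (seg x y s).
Proof.
  intros H1 H2 Ix Iy Sx Sy s Hs. pose proof (fan_orient_nz t H1 H2).
  apply (in_fan_cell_region t _ i j k); auto; [apply in_tri_seg | apply in_tri_cell_seg]; auto.
Qed.

Lemma in_fan_cell_conn t x y i j k : (1 <= t)%nat -> (t <= n - 2)%nat ->
  in_fan_tri t x -> in_fan_tri t y -> in_fan_cell t x i j k -> in_fan_cell t y i j k ->
  conn n p a m x y.
Proof. intros. apply conn_seg. apply (in_fan_cell_seg_region t x y i j k); auto. Qed.

(* The lattice points on the boundary of the polygon: on the outer side of a
   triangle, on the first side AB, on the last side AC, or at the apex. *)
Definition outer_lattice_pt (t i j k : nat) : Prop :=
  (i = 0 \/ (t = 1 /\ k = 0) \/ (t = n - 2 /\ j = 0) \/ (j = 0 /\ k = 0))%nat.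

Lemma internal_label_not_outer e t' i' j' k' : internal_label n m e ->
  (1 <= t')%nat -> (t' <= n - 2)%nat -> (i' + j' + k' = m)%nat -> outer_lattice_pt t' i' j' k' ->
  label_pt e <> fan_pt t' (INR i') (INR j') (INR k').
Proof.
  destruct e as [t [[i j] k]]. intros [H1 [H2 [Hs [Hi [Hk Hj]]]]] H1' H2' Hs' Hbd E.
  unfold outer_lattice_pt in Hbd.
  destruct (label_pt_glue t i j k t' i' j' k') as [? | [? | [? | ?]]]; auto; lia.
Qed.

Lemma inner_lattice_pt_label t i j k : (1 <= t)%nat -> (t <= n - 2)%nat -> (i + j + k = m)%nat ->
  ~ outer_lattice_pt t i j k -> exists e, internal_label n m e /\ label_pt e = fan_pt t (INR i) (INR j) (INR k).
Proof.
  unfold outer_lattice_pt. intros H1 H2 Hs Hout. destruct k as [|k].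
  - (* on the diagonal side AB, labelled in the previous triangle *)
    destruct t as [|t]; [lia|]. exists (t, (i, 0%nat, j)). split; [unfold internal_label; lia|].
    simpl. apply fan_pt_side.
  - exists (t, (i, j, S k)). split; [unfold internal_label; lia | reflexivity].
Qed.

Lemma same_cell_conn t x i j k t' y i' j' k' :
  (1 <= t)%nat -> (t <= n - 2)%nat -> (1 <= t')%nat -> (t' <= n - 2)%nat ->
  in_fan_tri t x -> in_fan_cell t x i j k -> in_fan_tri t' y -> in_fan_cell t' y i' j' k' ->
  fan_pt t (INR i) (INR j) (INR k) = fan_pt t' (INR i') (INR j') (INR k') -> conn n p a m x y.
Proof.
  intros H1 H2 H1' H2' Ix Sx Iy Sy E.
  destruct (lattice_pt_in_cell t i j k H1 H2 (proj1 Sx)) as [Iv Sv].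
  destruct (lattice_pt_in_cell t' i' j' k' H1' H2' (proj1 Sy)) as [Iv' Sv'].
  (* go through the common lattice point, which is the centre of both cells *)
  apply (conn_path2 x (fan_pt t (INR i) (INR j) (INR k)) y).
  - apply (in_fan_cell_seg_region t _ _ i j k); auto.
  - rewrite E. apply (in_fan_cell_seg_region t' _ _ i' j' k'); auto.
Qed.

Lemma arrow_end_intro t q i j k t' i' j' k' w b sd :
  (1 <= t)%nat -> (t <= n - 2)%nat -> (1 <= t')%nat -> (t' <= n - 2)%nat ->
  in_fan_tri t q -> in_fan_cell t q i j k ->
  fan_pt t (INR i) (INR j) (INR k) = fan_pt t' (INR i') (INR j') (INR k') ->
  (exists eps0, 0 < eps0 /\ forall eps, 0 < eps < eps0 ->
     in_fan_tri t' (arrow_pt w b sd eps) /\ in_fan_cell t' (arrow_pt w b sd eps) i' j' k') ->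
  arrow_end n p a m sd w b q.
Proof.
  intros H1 H2 H1' H2' Iq Sq E [e0 [He0 P]]. exists e0. split; auto.
  intros eps Heps. destruct (P eps Heps) as [IX SX]. split.
  - apply (in_fan_cell_region t' _ i' j' k'); auto.
  - apply (same_cell_conn t q i j k t' _ i' j' k'); auto.
Qed.

Lemma arrow_end_cell t v q w b sd i1 j1 k1 i2 j2 k2 : (1 <= t)%nat -> (t <= n - 2)%nat ->
  cell v q -> (sd = 1 \/ sd = -1) ->
  edge_separates (vt 0) (vt t) (vt (S t)) m w b i1 j1 k1 i2 j2 k2 -> arrow_end n p a m sd w b q ->
  v = fan_pt t (INR i1) (INR j1) (INR k1) \/ v = fan_pt t (INR i2) (INR j2) (INR k2).
Proof.
  intros H1 H2 Hq Hsd [kap [Hk P]] [e1 [He1 HA]].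
  destruct (P sd Hsd) as [e0 [He0 P0]].
  set (eps := Rmin e0 e1 / 2).
  assert (Heps : 0 < eps < e0 /\ 0 < eps < e1).
  { unfold eps. pose proof (Rmin_l e0 e1). pose proof (Rmin_r e0 e1).
    pose proof (Rmin_pos e0 e1 He0 He1). lra. }
  destruct (P0 eps (proj1 Heps)) as [IX [S1 S2]].
  destruct (HA eps (proj2 Heps)) as [RX CX]. fold (arrow_pt w b sd eps) in RX, CX.
  destruct (cell_conn v q _ CX Hq t H1 H2 IX) as [i [j [k [HSN ->]]]].
  pose proof (bc_sum _ _ _ m (fan_orient_nz t H1 H2) (arrow_pt w b sd eps)) as Hs.
  destruct (Rlt_dec 0 (sd * kap)) as [Hp|Hp].
  - left. injection (in_cell_unique _ _ _ _ _ _ _ _ _ _ HSN (S1 ltac:(lra))) as -> -> ->. auto.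
  - right. assert (sd * kap < 0) by (destruct Hsd; subst; lra).
    injection (in_cell_unique _ _ _ _ _ _ _ _ _ _ HSN (S2 H)) as -> -> ->. auto.
Qed.

Lemma outer_arrow_not_internal t q w b sd : (1 <= t)%nat -> (t <= n - 2)%nat ->
  outer_edge t w b -> (sd = 1 \/ sd = -1) -> arrow_end n p a m sd w b q -> ~ internal_vertex n p a m q.
Proof.
  intros H1 H2 Hout Hsd HA [_ Hno]. apply Hno. exists w, b.
  split; [apply (outer_edge_boundary_arrow t); auto | destruct Hsd; subst; auto].
Qed.

(* The cell of a lattice point on the boundary of the polygon is crossed by a
   boundary arrow. *)
Lemma outer_lattice_pt_not_internal t q i j k : (1 <= t)%nat -> (t <= n - 2)%nat ->
  in_fan_tri t q -> in_fan_cell t q i j k -> outer_lattice_pt t i j k -> ~ internal_vertex n p a m q.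
Proof.
  intros H1 H2 Iq Sq Hout. pose proof (proj1 Sq) as Hs.
  assert (Hend : forall t' w b i' j' k' c1 c2 c3,
    (1 <= t')%nat -> (t' <= n - 2)%nat -> outer_edge t' w b ->
    fan_pt t (INR i) (INR j) (INR k) = fan_pt t' (INR i') (INR j') (INR k') ->
    edge_separates (vt 0) (vt t') (vt (S t')) m w b i' j' k' c1 c2 c3 \/
    edge_separates (vt 0) (vt t') (vt (S t')) m w b c1 c2 c3 i' j' k' -> ~ internal_vertex n p a m q).
  { intros t' w b i' j' k' c1 c2 c3 H1' H2' Hw E [Hsep|Hsep];
      [destruct (edge_separates_side1 _ _ _ _ _ _ _ _ _ _ _ _ Hsep) as [sd [Hsd P]]
      |destruct (edge_separates_side2 _ _ _ _ _ _ _ _ _ _ _ _ Hsep) as [sd [Hsd P]]];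
      apply (outer_arrow_not_internal t' q w b sd); auto;
      apply (arrow_end_intro t q i j k t' i' j' k'); auto. }
  pose proof (fan_orient_nz t H1 H2) as D.
  unfold outer_lattice_pt in Hout.
  destruct i as [|i].
  - destruct j as [|j]; [destruct k as [|k]; [lia|] |].
    + apply (Hend t (white_node (vt 0) (vt t) (vt (S t)) m 0 0 k) (sideBC_node (vt 0) (vt t) (vt (S t)) m 0 k)
        0 0 (S k) 0 1 k)%nat; auto.
      * left. exists 0%nat, k. split; [lia | auto].
      * right. apply sideBC_edge_separates; auto; lia.
    + apply (Hend t (white_node (vt 0) (vt t) (vt (S t)) m 0 j k) (sideBC_node (vt 0) (vt t) (vt (S t)) m j k)
        0 (S j) k 0 j (S k))%nat; auto.
      * left. exists j, k. split; [lia | auto].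
      * left. apply sideBC_edge_separates; auto; lia.
  - assert (Hfirst : forall j', (j' = j)%nat -> (k = 0)%nat -> fan_pt t (INR (S i)) (INR j) (INR k) = fan_pt 1 (INR (S i)) (INR j') 0 ->
              ~ internal_vertex n p a m q).
    { intros j' -> -> E.
      apply (Hend 1 (white_node (vt 0) (vt 1) (vt 2) m i j 0) (sideAB_node (vt 0) (vt 1) (vt 2) m i j)
        (S i) j 0 i (S j) 0)%nat; auto; try lia.
      - right; left. split; auto. exists i, j. split; [lia | auto].
      - left. apply sideAB_edge_separates; [apply fan_orient_nz | auto | ..]; lia. }
    destruct Hout as [Hi0 | [[-> ->] | [[Ht ->] | [-> ->]]]]; [lia | apply (Hfirst j); auto | |].
    + apply (Hend t (white_node (vt 0) (vt t) (vt (S t)) m i 0 k) (sideAC_node (vt 0) (vt t) (vt (S t)) m i k)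
        (S i) 0 k i 0 (S k))%nat; auto.
      * right; right. split; auto. exists i, k. split; [lia | auto].
      * right. apply sideAC_edge_separates; auto; lia.
    + (* the apex, which is also the apex of the first triangle *)
      apply (Hfirst 0%nat); auto. assert (S i = m) as -> by lia. apply fan_pt_apex.
Qed.

Lemma outer_edge_separates t w b : (1 <= t)%nat -> (t <= n - 2)%nat -> outer_edge t w b ->
  exists i1 j1 k1 i2 j2 k2, edge_separates (vt 0) (vt t) (vt (S t)) m w b i1 j1 k1 i2 j2 k2 /\
    (i1 + j1 + k1 = m)%nat /\ (i2 + j2 + k2 = m)%nat /\
    outer_lattice_pt t i1 j1 k1 /\ outer_lattice_pt t i2 j2 k2.
Proof.
  intros H1 H2 [[j [k [Hs [-> ->]]]] | [[Ht [i [j [Hs [-> ->]]]]] | [Ht [i [k [Hs [-> ->]]]]]]];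
  pose proof (fan_orient_nz t H1 H2); unfold outer_lattice_pt.
  - exists 0%nat, (S j), k, 0%nat, j, (S k). split; [apply sideBC_edge_separates; auto; lia | lia].
  - exists (S i), j, 0%nat, i, (S j), 0%nat. split; [apply sideAB_edge_separates; auto; lia | lia].
  - exists i, 0%nat, (S k), (S i), 0%nat, k. split; [apply sideAC_edge_separates; auto; lia | lia].
Qed.

Lemma internal_label_internal_vertex e : internal_label n m e -> internal_vertex n p a m (label_pt e).
Proof.
  intros He. pose proof He as He'. destruct e as [t [[i j] k]]. destruct He' as [H1 [H2 [Hs _]]].
  destruct (lattice_pt_in_cell t i j k H1 H2 Hs) as [I0 S0].
  split; [apply (in_fan_cell_region t _ i j k); auto|].
  intros [w [b [HB Hend]]].
  destruct (boundary_arrow_outer w b HB) as [t' [H1' [H2' Hout]]].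
  destruct (outer_edge_separates t' w b H1' H2' Hout)
    as [i1 [j1 [k1 [i2 [j2 [k2 [Hsep [Hs1 [Hs2 [Ho1 Ho2]]]]]]]]]].
  pose proof (label_pt_cell _ He) as Hc.
  assert (Hsd : forall sd, sd = 1 \/ sd = -1 -> ~ arrow_end n p a m sd w b (label_pt (t, (i, j, k)))).
  { intros sd Hsd HA.
    destruct (arrow_end_cell t' _ _ w b sd i1 j1 k1 i2 j2 k2 H1' H2' Hc Hsd Hsep HA) as [E|E];
      [ apply (internal_label_not_outer (t, (i, j, k)) t' i1 j1 k1) | apply (internal_label_not_outer (t, (i, j, k)) t' i2 j2 k2) ];
      auto. }
  destruct Hend as [Hend|Hend]; [apply (Hsd (-1)) | apply (Hsd 1)]; auto.
Qed.

Lemma internal_vertex_label q : internal_vertex n p a m q ->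
  exists e, internal_label n m e /\ conn n p a m q (label_pt e).
Proof.
  intros Hq. destruct (region_cell q (proj1 Hq)) as [t [i [j [k [H1 [H2 [Iq Sq]]]]]]].
  destruct (classic (outer_lattice_pt t i j k)) as [Hout|Hin].
  - exfalso. apply (outer_lattice_pt_not_internal t q i j k); auto.
  - destruct (inner_lattice_pt_label t i j k H1 H2 (proj1 Sq) Hin) as [e [He E]].
    exists e. split; auto. rewrite E.
    destruct (lattice_pt_in_cell t i j k H1 H2 (proj1 Sq)) as [Iv Sv].
    apply (in_fan_cell_conn t _ _ i j k); auto.
Qed.

(* Two labels joined by a path have the same cell, hence the same lattice point. *)
Lemma label_pt_conn_eq e1 e2 : internal_label n m e1 -> internal_label n m e2 ->
  conn n p a m (label_pt e1) (label_pt e2) -> e1 = e2.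
Proof.
  intros R1 R2 HC. apply label_pt_inj; auto.
  apply (cell_unique _ _ (label_pt e2)); [apply (internal_label_internal_vertex e2 R2) | |].
  - apply (cell_conn _ _ _ HC), label_pt_cell; auto.
  - apply label_pt_cell; auto.
Qed.

Lemma internal_vertices_labels : num_internal_vertices n p a m (Z.of_nat (length (internal_labels n m))).
Proof.
  set (d0 := (0%nat, (0%nat, 0%nat, 0%nat))).
  exists (map label_pt (internal_labels n m)). split; [|split; [|split]].
  - rewrite length_map. reflexivity.
  - intros q Hq. apply in_map_iff in Hq as [e [<- He]].
    apply internal_label_internal_vertex, in_internal_labels; auto.
  - intros i j Hij Hj HC. rewrite length_map in Hj.
    rewrite !(nth_indep _ (0, 0) (label_pt d0)), !map_nth in HC by (rewrite length_map; lia).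
    apply label_pt_conn_eq in HC; try (apply in_internal_labels, nth_In; auto; lia).
    pose proof (proj1 (NoDup_nth (internal_labels n m) d0) (NoDup_internal_labels n m) i j ltac:(lia) Hj HC).
    lia.
  - intros q Hq. destruct (internal_vertex_label q Hq) as [e [He Hc]].
    exists (label_pt e). split; auto. apply in_map, in_internal_labels; auto.
Qed.

End Fan.

Lemma P2_internal_labels n m : (4 <= n)%nat -> (2 <= m)%nat ->
  P2 (Z.of_nat n) (Z.of_nat m - 1) = Z.of_nat (length (internal_labels n m)).
Proof.
  intros Hn Hm. pose proof (length_internal_labels n m Hn Hm) as HL.
  apply (f_equal Z.of_nat) in HL.
  rewrite Nat2Z.inj_mul, Nat2Z.inj_add, !Nat2Z.inj_mul, !Nat2Z.inj_sub in HL by lia.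
  unfold P2. simpl (Z.of_nat 1) in HL. simpl (Z.of_nat 2) in HL. simpl (Z.of_nat 3) in HL.
  rewrite <- (Z.div_mul (Z.of_nat (length (internal_labels n m))) 2) by lia.
  f_equal. lia.
Qed.

Theorem proposition4p2 (m n : nat) (p : nat -> pt) (a : nat) :
  (2 <= m)%nat -> (4 <= n)%nat -> convex_polygon n p -> (a < n)%nat ->
  num_internal_vertices n p a m (P2 (Z.of_nat n) (Z.of_nat m - 1)).
Proof.
  intros Hm Hn Hconv Ha.
  destruct (convex_vtx_sign n p a Ha Hconv) as [sg [Hsg Hsign]].
  rewrite P2_internal_labels by auto.
  exact (internal_vertices_labels n p a m Ha Hn Hm sg Hsg Hsign).
Qed.
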